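(* Let $l_1,u_1,l_2,u_2$ be non-negative integers and $(f(k))$, $(g(k))$ complex sequences such that the polynomial identity \[ \sum_{k=l_1}^{u_1}f(k)(1-t)^k=\sum_{k=l_2}^{u_2}g(k)t^k \] holds for all complex $t$. Let $r,s\in\mathbb{C}\setminus\mathbb{Z}^{-}$ with $s\neq0$ and $r-s\notin\mathbb{Z}^{-}$. Then \[ \sum_{k=l_1}^{u_1}f(k)\frac{1}{\binom{k+r}{s}}=\sum_{k=l_2}^{u_2}g(k)\frac{s}{r-s+1}\frac{1}{\binom{k+r}{r-s+1}}, \] and \[ \sum_{k=l_1}^{u_1}f(k)\frac{H_s-H_{k+r-s}}{\binom{k+r}{s}}=\sum_{k=l_2}^{u_2}g(k)\frac{r+1}{(r-s+1)^2}\frac{1}{\binom{k+r}{r-s+1}}+\sum_{k=l_2}^{u_2}g(k)\frac{s}{r-s+1}\frac{H_{k+s-1}-H_{r-s+1}}{\binom{k+r}{r-s+1}}. \]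
   Context: $\mathbb{Z}^{-}$ denotes the set of negative integers. For complex $z$ not a negative integer, $H_z=\psi(z+1)+\gamma$ ($\psi$ the digamma function, $\gamma$ Euler's constant). Binomial coefficients with complex entries: $\binom{x}{y}=\frac{\Gamma(x+1)}{\Gamma(y+1)\Gamma(x-y+1)}$. *)

From Stdlib Require Import Reals ClassicalEpsilon Factorial List.
From Coquelicot Require Import Coquelicot.

Open Scope C_scope.

Definition cexp (z : C) : C :=
  (exp (Re z) * cos (Im z), exp (Re z) * sin (Im z))%R.

Definition nat_cpow (n : nat) (z : C) : C := cexp (z * RtoC (ln (INR n))).

(* Gauss' product for Gamma:  Gamma z = lim_n  n! n^z / (z (z+1) ... (z+n)). *)
Definition gauss_seq (z : C) (n : nat) : C :=
  RtoC (INR (fact n)) * nat_cpow n z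
  / fold_right Cmult (RtoC 1) (map (fun j => z + RtoC (INR j)) (List.seq 0 (S n))).

(* Complex Gamma function (meaningful off the poles 0, -1, -2, ...). *)
Definition CGamma (z : C) : C :=
  epsilon (inhabits (RtoC 0))
    (fun l : C => filterlim (gauss_seq z) eventually (locally l)).

Definition CGamma' (z : C) : C :=
  epsilon (inhabits (RtoC 0))
    (fun l : C => is_derive (K := C_AbsRing) (V := C_NormedModule) CGamma z l).

Definition digamma (z : C) : C := CGamma' z / CGamma z.

Definition euler_gamma : R :=
  real (Lim_seq (fun n => (sum_n_m (fun k => / INR k) 1 n - ln (INR n))%R)).

Definition Harm (z : C) : C := digamma (z + RtoC 1) + RtoC euler_gamma.

Definition Cbinom (x y : C) : C :=
  CGamma (x + RtoC 1) / (CGamma (y + RtoC 1) * CGamma (x - y + RtoC 1)).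

Definition is_negint (z : C) : Prop := exists m : nat, z = RtoC (- INR (S m))%R.

From Stdlib Require Import Reals Lra Lia Psatz List ClassicalEpsilon.
From Coquelicot Require Import Coquelicot.
Open Scope C_scope.

(* Expanding (1 - t)^k, the hypothesis says that g is the binomial transform of f,
   g(j) = sum_k f(k) (-1)^j binom(k, j); dually, sum_k f(k) (Delta X)(k) = sum_j g(j) X(j) for every
   sequence X, where (Delta X)(k) = sum_j (-1)^j binom(k, j) X(j).  Since Gamma(z + k) = (z)_k Gamma(z),
   the right-hand summands are X(j) = (s)_j / (r + 1)_j up to the factor 1 / binom(r, s), and by the
   Chu-Vandermonde identity Delta[(a)_j / (c)_j](k) = (c - a)_k / (c)_k the left-hand summands are
   (Delta X)(k).  The harmonic identity is the derivative of Chu-Vandermonde in a, proved by the same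
   induction together with psi(z + 1) = psi(z) + 1/z.

   Gamma is defined as the limit of Gauss's product, so its analytic properties are proved directly:
   the factors of the product are 1 + O(1/m^2) uniformly on discs, hence the product converges at
   rate 1/n to a nonzero limit; so do its difference quotients, uniformly, which makes Gamma complex
   differentiable off the poles (Moore-Osgood). *)

Section RealEstimates.
Local Open Scope R_scope.

Lemma sin_bounds_pos (b : R) : 0 <= b <= 1/2 -> b - b^3/6 <= sin b <= b.
Proof.
  intros Hb. assert (HP := PI2_1).
  destruct (sin_bound b 0 ltac:(lra) ltac:(lra)) as [H1 H2].
  assert (E1 : sin_approx b (2*0+1) = b - b^3/6) by (unfold sin_approx, sin_term; simpl; field).
  assert (E2 : sin_approx b (2*(0+1)) = b - b^3/6 + b^5/120) by (unfold sin_approx, sin_term; simpl; field).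
  rewrite E1 in H1. rewrite E2 in H2.
  assert (0 <= b^3) by (apply pow_le; lra). assert (b^5 = b^3*b^2) by ring. assert (b^2 <= 1) by nra. split; nra.
Qed.

Lemma sin_bounds_small (b : R) : Rabs b <= 1/2 -> Rabs (sin b) <= Rabs b /\ Rabs (sin b - b) <= b^2.
Proof.
  intros Hb. destruct (Rle_or_lt 0 b) as [H|H].
  - rewrite Rabs_pos_eq in Hb by lra. destruct (sin_bounds_pos b ltac:(lra)).
    assert (0 <= b^3) by (apply pow_le; lra). assert (b^3 = b*b^2) by ring.
    assert (0 <= sin b) by nra.
    rewrite (Rabs_pos_eq b) by lra. rewrite (Rabs_pos_eq (sin b)) by lra.
    rewrite (Rabs_left1 (sin b - b)) by lra. split; nra.
  - rewrite Rabs_left in Hb by lra. destruct (sin_bounds_pos (-b) ltac:(lra)).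
    rewrite sin_neg in *. assert (0 <= (-b)^3) by (apply pow_le; lra). assert ((-b)^3 = (-b)*b^2) by ring.
    assert (sin b <= 0) by nra.
    rewrite (Rabs_left b) by lra. rewrite (Rabs_left1 (sin b)) by lra.
    rewrite (Rabs_pos_eq (sin b - b)) by lra. split; nra.
Qed.

Lemma one_minus_cos_bounds (b : R) : Rabs b <= 1 -> 0 <= 1 - cos b <= b^2/2.
Proof.
  intros Hb. assert (E : cos b = 1 - 2 * sin (b/2) * sin (b/2)).
  { rewrite <- cos_2a_sin. f_equal. field. }
  assert (Hb2 : Rabs (b/2) = Rabs b / 2) by (rewrite Rabs_div, (Rabs_pos_eq 2); lra).
  destruct (sin_bounds_small (b/2)) as [H1 _]; [lra|].
  rewrite Hb2 in H1. rewrite E.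
  assert (Rabs (sin (b/2)) * Rabs (sin (b/2)) <= Rabs b / 2 * (Rabs b / 2)).
  { apply Rmult_le_compat; auto using Rabs_pos. }
  rewrite <- Rabs_mult, Rabs_pos_eq in H by nra.
  rewrite <- (pow2_abs b). nra.
Qed.

Lemma exp_near0_bounds (a : R) : Rabs a <= 1/2 -> Rabs (exp a - 1 - a) <= 2 * a^2 /\ exp a <= 2.
Proof.
  intros Ha. apply Rabs_le_between in Ha. pose proof (exp_ineq1_le a).
  assert (Hup : exp a <= / (1 - a)).
  { rewrite <- (Rinv_inv (exp a)), <- exp_Ropp. apply Rinv_le_contravar; [lra|].
    pose proof (exp_ineq1_le (-a)). lra. }
  assert (/ (1 - a) - 1 - a = a^2 / (1-a)) by (field; lra).
  assert (a^2/(1-a) <= 2 * a^2).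
  { apply Rmult_le_reg_r with (1 - a). lra. unfold Rdiv. rewrite Rmult_assoc, Rinv_l by lra. nra. }
  assert (/ (1 - a) <= 2). { apply Rmult_le_reg_r with (1-a). lra. rewrite Rinv_l by lra. lra. }
  rewrite Rabs_pos_eq by lra. lra.
Qed.

End RealEstimates.

Lemma RtoC_neq0 (x : R) : (x <> 0)%R -> RtoC x <> 0.
Proof. intros H E. apply H. injection E. auto. Qed.

Lemma Cminus_neq0 (a b : C) : a <> b -> a - b <> 0.
Proof. intros H E. apply H. replace a with (a - b + b) by ring. rewrite E. ring. Qed.

Lemma Cmod_sub_le (a b : C) : (Cmod a <= Cmod b + Cmod (a - b))%R.
Proof. replace a with (b + (a - b)) at 1 by ring. apply Cmod_triangle. Qed.

Lemma Cmod_le_Re_Im (z : C) : (Cmod z <= Rabs (Re z) + Rabs (Im z))%R.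
Proof.
  pose proof (Cmod2_alt z). pose proof (Cmod_ge_0 z).
  pose proof (Rabs_pos (Re z)). pose proof (Rabs_pos (Im z)).
  rewrite <- (pow2_abs (Re z)), <- (pow2_abs (Im z)) in H. nra.
Qed.

Lemma Rabs_Re_Im_le_Cmod (z : C) : (Rabs (Re z) <= Cmod z /\ Rabs (Im z) <= Cmod z)%R.
Proof.
  pose proof (Rmax_Cmod z) as H.
  split; eapply Rle_trans; [apply Rmax_l | exact H | apply Rmax_r | exact H].
Qed.

Lemma Cmod_1_plus_ge (s : C) : (Cmod s <= 1/2)%R -> (1/2 <= Cmod (1 + s))%R.
Proof.
  intros H. pose proof (Cmod_sub_le 1 (1 + s)).
  replace (1 - (1 + s)) with (- s) in H0 by ring. rewrite Cmod_1, Cmod_opp in H0. lra.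
Qed.

Lemma Cmod_mult_RtoC_le (B : R) (w : C) (x : R) : (Cmod w <= B)%R -> (0 <= x)%R -> (Cmod (w * RtoC x) <= B * x)%R.
Proof. intros Hw Hx. rewrite Cmod_mult, Cmod_R, Rabs_pos_eq by auto. apply Rmult_le_compat_r; auto. Qed.

Lemma cexp_plus a b : cexp (a + b) = cexp a * cexp b.
Proof.
  destruct a as [a1 a2], b as [b1 b2]. unfold cexp, Cmult, Cplus, Re, Im; simpl.
  rewrite exp_plus, cos_plus, sin_plus. f_equal; ring.
Qed.

Lemma cexp_RtoC (x : R) : cexp (RtoC x) = RtoC (exp x).
Proof. unfold cexp, Re, Im; apply injective_projections; simpl; rewrite ?cos_0, ?sin_0; ring. Qed.

Lemma Cmod_cexp z : Cmod (cexp z) = exp (Re z).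
Proof.
  unfold Cmod, cexp; cbn [fst snd].
  replace ((exp (Re z) * cos (Im z)) ^ 2 + (exp (Re z) * sin (Im z)) ^ 2)%R with (exp (Re z) ^ 2)%R.
  - apply sqrt_pow2. left; apply exp_pos.
  - pose proof (sin2_cos2 (Im z)). unfold Rsqr in H. nra.
Qed.

Lemma cexp_neq0 z : cexp z <> 0.
Proof. intros H. pose proof (Cmod_cexp z). rewrite H, Cmod_0 in H0. pose proof (exp_pos (Re z)). lra. Qed.

Definition cexp_rem (u : C) : C := cexp u - 1 - u.

Lemma Cmod_cexp_rem_le u : (Cmod u <= 1/2)%R -> (Cmod (cexp_rem u) <= 3 * Cmod u ^ 2)%R.
Proof.
  intros Hu. destruct (Rabs_Re_Im_le_Cmod u) as [Ha Hb]. pose proof (Cmod2_alt u).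
  destruct u as [a b]. unfold Re, Im in *; simpl in *.
  eapply Rle_trans; [apply Cmod_le_Re_Im|]. unfold Re, Im.
  replace (fst (cexp_rem (a, b))) with (exp a * (cos b - 1) + (exp a - 1 - a))%R
    by (unfold cexp_rem, cexp, Re, Im; simpl; ring).
  replace (snd (cexp_rem (a, b))) with ((exp a - 1) * sin b + (sin b - b))%R
    by (unfold cexp_rem, cexp, Re, Im; simpl; ring).
  destruct (exp_near0_bounds a ltac:(lra)) as [E1 E2].
  destruct (sin_bounds_small b ltac:(lra)) as [S1 S2].
  destruct (one_minus_cos_bounds b ltac:(lra)) as [C1 C2].
  pose proof (exp_pos a).
  assert (Rabs (exp a * (cos b - 1)) <= b^2)%R.
  { rewrite Rabs_mult, Rabs_pos_eq by lra. rewrite Rabs_left1 by lra. nra. }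
  assert (Rabs (exp a - 1) <= 2 * Rabs a)%R.
  { replace (exp a - 1)%R with ((exp a - 1 - a) + a)%R by ring.
    eapply Rle_trans; [apply Rabs_triang|]. rewrite <- (pow2_abs a) in E1. pose proof (Rabs_pos a). nra. }
  assert (Rabs ((exp a - 1) * sin b) <= 2 * Rabs a * Rabs b)%R.
  { rewrite Rabs_mult. apply Rmult_le_compat; auto using Rabs_pos. }
  pose proof (Rabs_triang (exp a * (cos b - 1)) (exp a - 1 - a)).
  pose proof (Rabs_triang ((exp a - 1) * sin b) (sin b - b)).
  rewrite <- (pow2_abs a), <- (pow2_abs b) in *.
  pose proof (Rabs_pos a). pose proof (Rabs_pos b).
  assert (HH : (Cmod (a,b) * (Cmod (a,b) * 1) = Rabs a ^ 2 + Rabs b ^ 2)%R) by (rewrite !pow2_abs, H; ring).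
  rewrite HH. assert (0 <= (Rabs a - Rabs b)^2)%R by apply pow2_ge_0. lra.
Qed.

Lemma Cmod_cexp_sub1_le u : (Cmod u <= 1/2)%R -> (Cmod (cexp u - 1) <= 3 * Cmod u)%R.
Proof.
  intros H. replace (cexp u - 1) with (cexp_rem u + u) by (unfold cexp_rem; ring).
  eapply Rle_trans; [apply Cmod_triangle|]. pose proof (Cmod_cexp_rem_le u H).
  pose proof (Cmod_ge_0 u). nra.
Qed.

Lemma cexp_rem_sub u v :
  cexp_rem u - cexp_rem v = (cexp v - 1) * (cexp (u - v) - 1) + cexp_rem (u - v).
Proof.
  unfold cexp_rem. replace (cexp u) with (cexp v * cexp (u - v)) by (rewrite <- cexp_plus; f_equal; ring). ring.
Qed.

Lemma Cmod_cexp_rem_sub_le u v : (Cmod v <= 1/2)%R -> (Cmod (u - v) <= 1/2)%R ->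
  (Cmod (cexp_rem u - cexp_rem v) <= 9 * Cmod v * Cmod (u - v) + 3 * Cmod (u - v) ^ 2)%R.
Proof.
  intros H1 H2. rewrite cexp_rem_sub. eapply Rle_trans; [apply Cmod_triangle|].
  rewrite Cmod_mult. pose proof (Cmod_cexp_sub1_le v H1). pose proof (Cmod_cexp_sub1_le (u - v) H2).
  pose proof (Cmod_cexp_rem_le _ H2). pose proof (Cmod_ge_0 v). pose proof (Cmod_ge_0 (u - v)).
  assert (Cmod (cexp v - 1) * Cmod (cexp (u - v) - 1) <= (3 * Cmod v) * (3 * Cmod (u - v)))%R
    by (apply Rmult_le_compat; auto using Cmod_ge_0).
  nra.
Qed.

(** * Convergence at rate 1/n *)

Lemma exists_nat_ge (r : R) : exists n : nat, (r <= INR n)%R.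
Proof. destruct (INR_archimed 1 r ltac:(lra)) as [n Hn]. exists n. lra. Qed.

Lemma eventually_div_le (A e : R) N : (0 < e)%R -> (1 <= N)%nat ->
  exists M, (N <= M)%nat /\ forall m, (M <= m)%nat -> (A / INR m <= e)%R.
Proof.
  intros He HN. destruct (exists_nat_ge (Rabs A / e + 1)) as [M HM]. exists (max N M). split; [lia|].
  intros m Hm. assert (INR M <= INR m)%R by (apply le_INR; lia).
  assert (0 < INR m)%R by (apply lt_0_INR; lia).
  apply Rmult_le_reg_r with (INR m); auto. unfold Rdiv. rewrite Rmult_assoc, Rinv_l, Rmult_1_r by lra.
  assert (Rabs A <= e * INR m)%R.
  { apply Rmult_le_reg_r with (/ e)%R. apply Rinv_0_lt_compat; lra.
    replace (e * INR m * / e)%R with (INR m) by (field; lra).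
    unfold Rdiv in HM. lra. }
  pose proof (Rle_abs A). lra.
Qed.

Lemma zero_of_rate (x : C) N A : (forall n, (N <= n)%nat -> (Cmod x <= A / INR n)%R) -> x = 0.
Proof.
  intros H. destruct (Ceq_dec x 0) as [E|E]; auto. exfalso.
  apply Cmod_gt_0 in E.
  destruct (eventually_div_le A (Cmod x / 2) (S N) ltac:(lra) ltac:(lia)) as [M [HM1 HM2]].
  specialize (H M ltac:(lia)). specialize (HM2 M (le_n M)). lra.
Qed.

Lemma rate_unique (a b : C) (x : nat -> C) N A B :
  (forall n, (N <= n)%nat -> (Cmod (a - x n) <= A / INR n)%R) ->
  (forall n, (N <= n)%nat -> (Cmod (b - x n) <= B / INR n)%R) -> a = b.
Proof.
  intros Ha Hb. enough (a - b = 0) by (replace a with (a - b + b) by ring; rewrite H; ring).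
  apply (zero_of_rate _ N (A + B)). intros n Hn.
  replace (a - b) with ((a - x n) - (b - x n)) by ring.
  eapply Rle_trans; [apply Cmod_triangle|]. rewrite Cmod_opp.
  specialize (Ha n Hn). specialize (Hb n Hn). unfold Rdiv in *. lra.
Qed.

Lemma rate_mult (a b : C) (x y : nat -> C) N A B : (1 <= N)%nat ->
  (forall n, (N <= n)%nat -> (Cmod (a - x n) <= A / INR n)%R) ->
  (forall n, (N <= n)%nat -> (Cmod (b - y n) <= B / INR n)%R) ->
  forall n, (N <= n)%nat -> (Cmod (a * b - x n * y n) <= (A * Cmod b + (Cmod a + A) * B) / INR n)%R.
Proof.
  intros HN Ha Hb n Hn.
  assert (Hn0 : (1 <= INR n)%R) by (apply (le_INR 1); lia).
  specialize (Ha n Hn). specialize (Hb n Hn).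
  assert (HA : (0 <= A)%R).
  { apply Rmult_le_reg_r with (/ INR n)%R; [apply Rinv_0_lt_compat; lra|].
    pose proof (Cmod_ge_0 (a - x n)). unfold Rdiv in Ha. lra. }
  assert (HAn : (A / INR n <= A)%R).
  { unfold Rdiv. rewrite <- (Rmult_1_r A) at 2. apply Rmult_le_compat_l; auto.
    rewrite <- Rinv_1. apply Rinv_le_contravar; lra. }
  assert (Hx : (Cmod (x n) <= Cmod a + A)%R).
  { pose proof (Cmod_sub_le (x n) a). replace (x n - a) with (- (a - x n)) in H by ring.
    rewrite Cmod_opp in H. lra. }
  replace (a * b - x n * y n) with ((a - x n) * b + x n * (b - y n)) by ring.
  eapply Rle_trans; [apply Cmod_triangle|]. rewrite !Cmod_mult.
  pose proof (Cmod_ge_0 b). pose proof (Cmod_ge_0 (x n)). pose proof (Cmod_ge_0 (b - y n)).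
  assert (Cmod (a - x n) * Cmod b <= A / INR n * Cmod b)%R by (apply Rmult_le_compat_r; auto).
  assert (Cmod (x n) * Cmod (b - y n) <= (Cmod a + A) * (B / INR n))%R by (apply Rmult_le_compat; auto).
  replace ((A * Cmod b + (Cmod a + A) * B) / INR n)%R
    with (A / INR n * Cmod b + (Cmod a + A) * (B / INR n))%R by (field; lra).
  lra.
Qed.

Lemma rate_quotient (a b h : C) (x y : nat -> C) N A B : h <> 0 -> (1 <= N)%nat ->
  (forall n, (N <= n)%nat -> (Cmod (a - x n) <= A / INR n)%R) ->
  (forall n, (N <= n)%nat -> (Cmod (b - y n) <= B / INR n)%R) ->
  forall n, (N <= n)%nat -> (Cmod ((a - b) / h - (x n - y n) / h) <= (A + B) / Cmod h / INR n)%R.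
Proof.
  intros Hh HN Ha Hb n Hn. assert (Hp : (0 < Cmod h)%R) by (apply Cmod_gt_0; auto).
  assert (Hn0 : (0 < INR n)%R) by (apply lt_0_INR; lia).
  replace ((a - b) / h - (x n - y n) / h) with (((a - x n) + - (b - y n)) / h) by (field; auto).
  rewrite Cmod_div by auto.
  replace ((A + B) / Cmod h / INR n)%R with ((A / INR n + B / INR n) / Cmod h)%R by (field; lra).
  unfold Rdiv at 1 4. apply Rmult_le_compat_r; [left; apply Rinv_0_lt_compat; auto|].
  eapply Rle_trans; [apply Cmod_triangle|]. rewrite Cmod_opp.
  apply Rplus_le_compat; auto.
Qed.

Lemma filterlim_of_rate (u : nat -> C) l N A :
  (forall n, (N <= n)%nat -> (Cmod (l - u n) <= A / INR n)%R) -> filterlim u eventually (locally l).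
Proof.
  intros H P [eps HP].
  destruct (eventually_div_le A (eps / 2) (S N) ltac:(pose proof (cond_pos eps); lra) ltac:(lia)) as [M [HM1 HM2]].
  exists M. intros n Hn. apply HP.
  apply C_NormedModule_mixin_compat1.
  replace (minus (u n) l) with (- (l - u n)) by (unfold minus, plus, opp; simpl; ring).
  change (Cmod (- (l - u n)) < eps)%R. rewrite Cmod_opp.
  specialize (H n ltac:(lia)). specialize (HM2 n Hn). pose proof (cond_pos eps). lra.
Qed.

Lemma real_cauchy_rate (y : nat -> R) N A : (1 <= N)%nat ->
  (forall n m, (N <= n)%nat -> (N <= m)%nat -> (Rabs (y n - y m) <= A / INR n + A / INR m)%R) ->
  exists l, forall n, (N <= n)%nat -> (Rabs (l - y n) <= A / INR n)%R.
Proof.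
  intros HN H.
  assert (HC : Cauchy_crit y).
  { intros eps Heps. destruct (eventually_div_le A (eps / 3) N ltac:(lra) HN) as [M [HM1 HM2]].
    exists M. intros n m Hn Hm. unfold Rdist.
    specialize (H n m ltac:(lia) ltac:(lia)). pose proof (HM2 n Hn). pose proof (HM2 m Hm). lra. }
  destruct (Rcomplete.R_complete y HC) as [l Hl]. exists l. intros n Hn.
  apply le_epsilon. intros eps Heps.
  destruct (Hl (eps / 2)%R ltac:(lra)) as [N1 HN1].
  destruct (eventually_div_le A (eps / 2) N ltac:(lra) HN) as [M [HM1 HM2]].
  set (m := max (max n N1) M).
  specialize (HN1 m ltac:(unfold m; lia)). unfold Rdist in HN1.
  specialize (H n m Hn ltac:(unfold m; lia)). specialize (HM2 m ltac:(unfold m; lia)).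
  replace (l - y n)%R with ((y m - y n) - (y m - l))%R by ring.
  eapply Rle_trans; [apply Rabs_triang|]. rewrite Rabs_Ropp. rewrite Rabs_minus_sym in H. lra.
Qed.

Lemma cauchy_rate (x : nat -> C) N A : (1 <= N)%nat ->
  (forall n m, (N <= n)%nat -> (N <= m)%nat -> (Cmod (x n - x m) <= A / INR n + A / INR m)%R) ->
  exists l, forall n, (N <= n)%nat -> (Cmod (l - x n) <= 2 * A / INR n)%R.
Proof.
  intros HN H.
  destruct (real_cauchy_rate (fun n => Re (x n)) N A HN) as [lr Hlr].
  { intros n m Hn Hm. eapply Rle_trans; [|apply (H n m Hn Hm)].
    replace (Re (x n) - Re (x m))%R with (Re (x n - x m)) by (unfold Re; simpl; ring).
    apply Rabs_Re_Im_le_Cmod. }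
  destruct (real_cauchy_rate (fun n => Im (x n)) N A HN) as [li Hli].
  { intros n m Hn Hm. eapply Rle_trans; [|apply (H n m Hn Hm)].
    replace (Im (x n) - Im (x m))%R with (Im (x n - x m)) by (unfold Im; simpl; ring).
    apply Rabs_Re_Im_le_Cmod. }
  exists (lr, li). intros n Hn. eapply Rle_trans; [apply Cmod_le_Re_Im|].
  specialize (Hlr n Hn). specialize (Hli n Hn). unfold Re, Im in *. simpl in *.
  assert (0 < INR n)%R by (apply lt_0_INR; lia).
  replace (2 * A / INR n)%R with (A / INR n + A / INR n)%R by (field; lra).
  unfold Rminus in *. lra.
Qed.

Definition inv_step (m : nat) : R := / INR m - / INR (S m).

Lemma inv_step_eq m : (1 <= m)%nat -> inv_step m = (/ (INR m * INR (S m)))%R.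
Proof. intros Hm. unfold inv_step. rewrite S_INR. assert (1 <= INR m)%R by (apply (le_INR 1); lia). field. lra. Qed.

Lemma inv_step_pos m : (1 <= m)%nat -> (0 < inv_step m)%R.
Proof.
  intros Hm. rewrite inv_step_eq by auto. apply Rinv_0_lt_compat, Rmult_lt_0_compat; apply lt_0_INR; lia.
Qed.

Lemma inv_telescope N k : (/ INR N - / INR (N + S k) = (/ INR N - / INR (N + k)) + inv_step (N + k))%R.
Proof. unfold inv_step. rewrite <- plus_n_Sm. ring. Qed.

Lemma inv_telescope_bounds N k : (1 <= N)%nat -> (0 <= / INR N - / INR (N + k) <= / INR N)%R.
Proof.
  intros HN. assert (1 <= INR N)%R by (apply (le_INR 1); lia).
  assert (INR N <= INR (N + k))%R by (apply le_INR; lia).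
  assert (/ INR (N + k) <= / INR N)%R by (apply Rinv_le_contravar; lra).
  assert (0 < / INR (N + k))%R by (apply Rinv_0_lt_compat; lra). lra.
Qed.

Lemma inv_le_1 N : (1 <= N)%nat -> (/ INR N <= 1)%R.
Proof. intros HN. rewrite <- Rinv_1. apply Rinv_le_contravar; [lra|]. apply (le_INR 1); lia. Qed.

(* Discrete Gronwall: the weights [inv_step m] telescope to at most 1, whence the factor [exp K]. *)
Lemma gronwall_inv_step (u : nat -> R) (K K' : R) N :
  (1 <= N)%nat -> (0 <= K)%R -> (0 <= K')%R -> (0 <= u N)%R ->
  (forall m, (N <= m)%nat -> (u (S m) <= u m * (1 + K * inv_step m) + K' * inv_step m)%R) ->
  forall n, (N <= n)%nat -> (u n <= (u N + K') * exp K)%R.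
Proof.
  intros HN HK HK' Hu0 Hrec.
  assert (Hmain : forall k, (u (N + k)%nat <= (u N + K' * (/ INR N - / INR (N + k)))
                                * exp (K * (/ INR N - / INR (N + k))))%R).
  { induction k.
    - rewrite Nat.add_0_r, Rminus_diag, !Rmult_0_r, exp_0. lra.
    - specialize (Hrec (N + k)%nat ltac:(lia)).
      rewrite inv_telescope. replace (u (N + S k)%nat) with (u (S (N + k))) by (f_equal; lia).
      pose proof (inv_step_pos (N + k) ltac:(lia)).
      destruct (inv_telescope_bounds N k HN).
      set (t := (/ INR N - / INR (N + k))%R) in *. set (c := inv_step (N + k)) in *.
      replace (K * (t + c))%R with (K * t + K * c)%R by ring. rewrite exp_plus.
      pose proof (exp_ineq1_le (K * c)). pose proof (exp_pos (K * t)).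
      assert (1 <= exp (K * t))%R by (pose proof (exp_ineq1_le (K * t)); nra).
      assert (1 <= exp (K * c))%R by nra.
      assert (u (N + k)%nat * (1 + K * c) <= (u N + K' * t) * exp (K * t) * (1 + K * c))%R.
      { apply Rmult_le_compat_r; nra. }
      assert ((u N + K' * t) * exp (K * t) * (1 + K * c) <= (u N + K' * t) * exp (K * t) * exp (K * c))%R.
      { apply Rmult_le_compat_l; [|lra]. apply Rmult_le_pos; nra. }
      assert (K' * c <= K' * c * (exp (K * t) * exp (K * c)))%R.
      { rewrite <- (Rmult_1_r (K' * c)) at 1. apply Rmult_le_compat_l; nra. }
      nra. }
  intros n Hn. replace n with (N + (n - N))%nat by lia.
  specialize (Hmain (n - N)%nat). destruct (inv_telescope_bounds N (n - N) HN). pose proof (inv_le_1 N HN).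
  eapply Rle_trans; [exact Hmain|].
  apply Rmult_le_compat; [nra | left; apply exp_pos | nra |].
  destruct (Req_dec (K * (/ INR N - / INR (N + (n - N)))) K) as [E|E]; [rewrite E; lra|].
  left. apply exp_increasing. nra.
Qed.

Lemma cauchy_inv_step (u : nat -> C) N B : (0 <= B)%R -> (1 <= N)%nat ->
  (forall m, (N <= m)%nat -> (Cmod (u (S m) - u m) <= B * inv_step m)%R) ->
  exists l, forall n, (N <= n)%nat -> (Cmod (l - u n) <= 2 * B / INR n)%R.
Proof.
  intros HB HN H.
  assert (Ht : forall n k, (N <= n)%nat -> (Cmod (u (n + k)%nat - u n) <= B / INR n)%R).
  { intros n k Hn.
    enough (Cmod (u (n + k)%nat - u n) <= B * (/ INR n - / INR (n + k)))%R.
    { destruct (inv_telescope_bounds n k ltac:(lia)). unfold Rdiv.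
      eapply Rle_trans; [exact H0|]. apply Rmult_le_compat_l; lra. }
    induction k.
    - rewrite Nat.add_0_r, Rminus_diag, Rmult_0_r. replace (u n - u n) with (RtoC 0) by ring.
      rewrite Cmod_0. lra.
    - rewrite inv_telescope. replace (u (n + S k)%nat) with (u (S (n + k))) by (f_equal; lia).
      replace (u (S (n + k)) - u n) with ((u (S (n + k)) - u (n + k)%nat) + (u (n + k)%nat - u n)) by ring.
      eapply Rle_trans; [apply Cmod_triangle|]. specialize (H (n + k)%nat ltac:(lia)). lra. }
  apply (cauchy_rate u N B HN). intros n m Hn Hm.
  assert (0 <= B / INR n /\ 0 <= B / INR m)%R as [].
  { split; apply Rdiv_le_0_compat; auto; apply lt_0_INR; lia. }
  destruct (Nat.le_ge_cases n m).
  - pose proof (Ht n (m - n)%nat Hn) as Hnm. replace (n + (m - n))%nat with m in Hnm by lia.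
    rewrite <- Cmod_opp. replace (- (u n - u m)) with (u m - u n) by ring. lra.
  - pose proof (Ht m (n - m)%nat Hm) as Hmn. replace (m + (n - m))%nat with n in Hmn by lia. lra.
Qed.

Lemma perturbed_product (u s e : nat -> C) K K' N : (1 <= N)%nat -> (0 <= K)%R -> (0 <= K')%R ->
  (forall m, (N <= m)%nat -> u (S m) = u m * (1 + s m) + e m /\
     (Cmod (s m) <= K * inv_step m)%R /\ (Cmod (e m) <= K' * inv_step m)%R) ->
  (forall n, (N <= n)%nat -> (Cmod (u n) <= (Cmod (u N) + K') * exp K)%R) /\
  exists l, forall n, (N <= n)%nat ->
    (Cmod (l - u n) <= 2 * ((Cmod (u N) + K') * exp K * K + K') / INR n)%R.
Proof.
  intros HN HK HK' H.
  set (M := ((Cmod (u N) + K') * exp K)%R).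
  assert (Hbd : forall n, (N <= n)%nat -> (Cmod (u n) <= M)%R).
  { apply (gronwall_inv_step (fun n => Cmod (u n)) K K' N HN HK HK' (Cmod_ge_0 _)).
    intros m Hm. destruct (H m Hm) as [E [Hs He]]. rewrite E.
    eapply Rle_trans; [apply Cmod_triangle|]. rewrite Cmod_mult.
    apply Rplus_le_compat; auto. apply Rmult_le_compat_l; [apply Cmod_ge_0|].
    eapply Rle_trans; [apply Cmod_triangle|]. rewrite Cmod_1. lra. }
  split; [exact Hbd|].
  assert (HM : (0 <= M)%R).
  { unfold M. apply Rmult_le_pos; [pose proof (Cmod_ge_0 (u N)); lra | left; apply exp_pos]. }
  apply cauchy_inv_step; [nra | exact HN|].
  intros m Hm. destruct (H m Hm) as [E [Hs He]].
  replace (u (S m) - u m) with (u m * s m + e m) by (rewrite E; ring).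
  eapply Rle_trans; [apply Cmod_triangle|]. rewrite Cmod_mult.
  assert (Cmod (u m) * Cmod (s m) <= M * (K * inv_step m))%R
    by (apply Rmult_le_compat; auto using Cmod_ge_0).
  lra.
Qed.

Lemma perturbed_product_limit (u s e : nat -> C) K K' N (a : C) N' A :
  (1 <= N)%nat -> (0 <= K)%R -> (0 <= K')%R ->
  (forall m, (N <= m)%nat -> u (S m) = u m * (1 + s m) + e m /\
     (Cmod (s m) <= K * inv_step m)%R /\ (Cmod (e m) <= K' * inv_step m)%R) ->
  (forall n, (N' <= n)%nat -> (Cmod (a - u n) <= A / INR n)%R) ->
  forall n, (N <= n)%nat -> (Cmod (a - u n) <= 2 * ((Cmod (u N) + K') * exp K * K + K') / INR n)%R.
Proof.
  intros HN HK HK' H Ha. destruct (perturbed_product u s e K K' N HN HK HK' H) as [_ [l Hl]].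
  replace a with l; [exact Hl|].
  apply (rate_unique _ _ u (max N N') (2 * ((Cmod (u N) + K') * exp K * K + K')) A);
    intros n Hn; [apply Hl | apply Ha]; lia.
Qed.

Lemma product_cvg (u s : nat -> C) K N : (1 <= N)%nat -> (0 <= K)%R ->
  (forall m, (N <= m)%nat -> u (S m) = u m * (1 + s m) /\ (Cmod (s m) <= K * inv_step m)%R) ->
  (forall n, (N <= n)%nat -> (Cmod (u n) <= Cmod (u N) * exp K)%R) /\
  exists l, forall n, (N <= n)%nat -> (Cmod (l - u n) <= 2 * (Cmod (u N) * exp K * K) / INR n)%R.
Proof.
  intros HN HK H.
  destruct (perturbed_product u s (fun _ => 0) K 0 N HN HK (Rle_refl 0)) as [Hb [l Hl]].
  { intros m Hm. destruct (H m Hm) as [E Hs]. rewrite Cmod_0, Rmult_0_l, Cplus_0_r.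
    repeat split; auto; lra. }
  split; [intros n Hn; rewrite <- (Rplus_0_r (Cmod (u N))); auto|].
  exists l. intros n Hn. specialize (Hl n Hn). rewrite !Rplus_0_r in Hl. exact Hl.
Qed.

(* The reciprocals [/ u n] form a product of the same kind, whose limit is an inverse of [l]. *)
Lemma product_limit_neq0 (u s : nat -> C) K N l A : (1 <= N)%nat -> (0 <= K)%R ->
  (forall m, (N <= m)%nat -> u (S m) = u m * (1 + s m) /\
     (Cmod (s m) <= K * inv_step m)%R /\ (K * inv_step m <= 1/2)%R) ->
  u N <> 0 -> (forall n, (N <= n)%nat -> (Cmod (l - u n) <= A / INR n)%R) -> l <> 0.
Proof.
  intros HN HK H HuN Hl Hl0.
  assert (H1s : forall m, (N <= m)%nat -> (1/2 <= Cmod (1 + s m))%R /\ 1 + s m <> 0).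
  { intros m Hm. destruct (H m Hm) as [_ [Hs Hk]]. pose proof (Cmod_1_plus_ge (s m) ltac:(lra)).
    split; [lra|]. intros E. rewrite E, Cmod_0 in H0. lra. }
  assert (Hnz : forall n, (N <= n)%nat -> u n <> 0).
  { intros n Hn. induction Hn; auto. destruct (H m Hn) as [E _]. rewrite E.
    apply Cmult_neq_0; auto. apply H1s; auto. }
  destruct (product_cvg (fun n => / u n) (fun m => - (s m / (1 + s m))) (2 * K) N HN ltac:(lra))
    as [_ [l' Hl']].
  { intros m Hm. destruct (H m Hm) as [E [Hs Hk]]. destruct (H1s m Hm) as [H1 H2].
    pose proof (Hnz m Hm). split.
    - rewrite E. field. auto.
    - rewrite Cmod_opp, Cmod_div by auto.
      apply Rle_trans with (Cmod (s m) / (1/2))%R.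
      + unfold Rdiv. apply Rmult_le_compat_l; [apply Cmod_ge_0|]. apply Rinv_le_contravar; lra.
      + lra. }
  assert (E : l * l' = 1).
  { apply (rate_unique _ _ (fun n => u n * / u n) N _ 0
             (rate_mult l l' u (fun n => / u n) N _ _ HN Hl Hl')).
    intros n Hn. rewrite Cinv_r by auto. replace (1 - 1) with (RtoC 0) by ring.
    rewrite Cmod_0. unfold Rdiv. lra. }
  rewrite Hl0, Cmult_0_l in E. injection E. lra.
Qed.

(** * Complex derivatives *)

(* Coquelicot's [is_derive] on [C] exists for two normed-module structures that are not convertible:
   [C_NormedModule], used in the definition of [CGamma'], and [AbsRing_NormedModule C_AbsRing], for
   which the calculus rules are stated. This epsilon-delta form is equivalent to both. *)
Definition is_cderiv (f : C -> C) (z L : C) : Prop :=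
  forall eps : R, (0 < eps)%R -> exists eta : R, (0 < eta)%R /\
    forall w, (Cmod (w - z) < eta)%R ->
      (Cmod (f w - f z - L * (w - z)) <= eps * Cmod (w - z))%R.

Local Notation CN := (AbsRing_NormedModule C_AbsRing).
Local Notation is_derive_C := (is_derive (K := C_AbsRing) (V := CN)).

Lemma is_cderiv_is_C_derive f z L :
  is_cderiv f z L -> is_derive (K := C_AbsRing) (V := C_NormedModule) f z L.
Proof.
  intros H. split.
  - apply is_linear_scal_l.
  - intros x Hx.
    apply (is_filter_lim_locally_unique (K:=C_AbsRing) (V := CN)) in Hx. subst x.
    intros eps. destruct (H eps (cond_pos eps)) as [eta [Heta Hw]].
    exists (mkposreal _ Heta). intros y Hy.
    change (Cmod (y - z) < eta)%R in Hy.
    change (Cmod (f y - f z - (y - z) * L) <= eps * Cmod (y - z))%R.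
    rewrite (Cmult_comm (y - z)). exact (Hw y Hy).
Qed.

Lemma is_cderiv_is_derive f z L : is_cderiv f z L -> is_derive_C f z L.
Proof.
  intros H. split.
  - apply is_linear_scal_l.
  - intros x Hx.
    apply (is_filter_lim_locally_unique (K:=C_AbsRing) (V := CN)) in Hx. subst x.
    intros eps. destruct (H eps (cond_pos eps)) as [eta [Heta Hw]].
    exists (mkposreal _ Heta). intros y Hy.
    change (Cmod (y - z) < eta)%R in Hy.
    change (Cmod (f y - f z - (y - z) * L) <= eps * Cmod (y - z))%R.
    rewrite (Cmult_comm (y - z)). exact (Hw y Hy).
Qed.

Lemma is_derive_is_cderiv f z L : is_derive_C f z L -> is_cderiv f z L.
Proof.
  intros [_ H] eps Heps.
  destruct (H z (fun P HP => HP) (mkposreal eps Heps)) as [[eta Heta] Hw].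
  exists eta. split; [exact Heta|]. intros w Hlt. specialize (Hw w Hlt).
  change (Cmod (f w - f z - (w - z) * L) <= eps * Cmod (w - z))%R in Hw.
  rewrite (Cmult_comm L). exact Hw.
Qed.

Lemma is_cderiv_const c z : is_cderiv (fun _ => c) z 0.
Proof. apply is_derive_is_cderiv, (is_derive_const (K := C_AbsRing) (V := CN)). Qed.

Lemma is_cderiv_id z : is_cderiv (fun w => w) z 1.
Proof. apply is_derive_is_cderiv, (is_derive_id (K := C_AbsRing)). Qed.

Lemma is_cderiv_plus f g z df dg : is_cderiv f z df -> is_cderiv g z dg ->
  is_cderiv (fun w => f w + g w) z (df + dg).
Proof.
  intros Hf Hg. apply is_derive_is_cderiv.
  apply (is_derive_plus (K := C_AbsRing) (V := CN)); apply is_cderiv_is_derive; assumption.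
Qed.

Lemma is_cderiv_mult f g z df dg : is_cderiv f z df -> is_cderiv g z dg ->
  is_cderiv (fun w => f w * g w) z (df * g z + f z * dg).
Proof.
  intros Hf Hg. apply is_derive_is_cderiv.
  apply (is_derive_mult (K := C_AbsRing)); [apply is_cderiv_is_derive; assumption.. | exact Cmult_comm].
Qed.

Lemma is_cderiv_comp f g z df dg : is_cderiv f (g z) df -> is_cderiv g z dg ->
  is_cderiv (fun w => f (g w)) z (dg * df).
Proof.
  intros Hf Hg. apply is_derive_is_cderiv.
  apply (is_derive_comp (K := C_AbsRing) (V := CN)); apply is_cderiv_is_derive; assumption.
Qed.

Lemma is_cderiv_ext_loc f g z L :
  (exists d, (0 < d)%R /\ forall w, (Cmod (w - z) < d)%R -> f w = g w) ->
  is_cderiv f z L -> is_cderiv g z L.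
Proof.
  intros [d [Hd Hfg]] Hf. apply is_derive_is_cderiv.
  apply (is_derive_ext_loc (K := C_AbsRing) (V := CN) f g);
    [exists (mkposreal d Hd); exact Hfg | exact (is_cderiv_is_derive _ _ _ Hf)].
Qed.

Lemma is_cderiv_C_derive f z L : is_cderiv f z L -> C_derive f z = L.
Proof. intros H. apply is_C_derive_unique, is_cderiv_is_C_derive, H. Qed.

Lemma is_cderiv_unique f z L1 L2 : is_cderiv f z L1 -> is_cderiv f z L2 -> L1 = L2.
Proof. intros H1 H2. rewrite <- (is_cderiv_C_derive _ _ _ H1). apply is_cderiv_C_derive, H2. Qed.

Lemma is_cderiv_cexp z : is_cderiv cexp z (cexp z).
Proof.
  intros eps Heps. pose proof (Cmod_ge_0 (cexp z)).
  exists (Rmin (1/2) (eps / (3 * Cmod (cexp z) + 1)))%R. split.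
  { apply Rmin_pos. lra. apply Rdiv_lt_0_compat; lra. }
  intros w Hw.
  replace (cexp w - cexp z - cexp z * (w - z)) with (cexp z * cexp_rem (w - z)).
  2:{ unfold cexp_rem. replace (cexp w) with (cexp z * cexp (w - z)) by (rewrite <- cexp_plus; f_equal; ring). ring. }
  rewrite Cmod_mult. pose proof (Cmod_ge_0 (w - z)).
  assert (H1 : (Cmod (w - z) <= 1/2)%R) by (left; eapply Rlt_le_trans; [exact Hw | apply Rmin_l]).
  assert (H2 : (Cmod (w - z) <= eps / (3 * Cmod (cexp z) + 1))%R)
    by (left; eapply Rlt_le_trans; [exact Hw | apply Rmin_r]).
  pose proof (Cmod_cexp_rem_le _ H1).
  assert (H4 : ((3 * Cmod (cexp z) + 1) * Cmod (w - z) <= eps)%R).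
  { apply Rmult_le_reg_r with (/ (3 * Cmod (cexp z) + 1))%R. apply Rinv_0_lt_compat; lra.
    replace ((3 * Cmod (cexp z) + 1) * Cmod (w - z) * / (3 * Cmod (cexp z) + 1))%R with (Cmod (w - z))
      by (field; lra).
    exact H2. }
  assert (Cmod (cexp z) * Cmod (cexp_rem (w - z)) <= Cmod (cexp z) * (3 * Cmod (w - z) ^ 2))%R
    by (apply Rmult_le_compat_l; auto).
  nra.
Qed.

Lemma is_cderiv_Cinv (z : C) : z <> 0 -> is_cderiv (fun w => / w) z (- / (z * z)).
Proof.
  intros Hz eps Heps. assert (Hm : (0 < Cmod z)%R) by (apply (proj1 (Cmod_gt_0 _)); auto).
  exists (Rmin (Cmod z / 2) (eps * Cmod z ^ 3 / 2))%R. split.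
  { apply Rmin_pos. lra. apply Rdiv_lt_0_compat; [|lra]. apply Rmult_lt_0_compat; auto. apply pow_lt; auto. }
  intros w Hw.
  assert (H1 : (Cmod (w - z) < Cmod z / 2)%R) by (eapply Rlt_le_trans; [exact Hw | apply Rmin_l]).
  assert (H2 : (Cmod (w - z) <= eps * Cmod z ^ 3 / 2)%R) by (left; eapply Rlt_le_trans; [exact Hw | apply Rmin_r]).
  assert (Hw0 : (Cmod z / 2 <= Cmod w)%R).
  { pose proof (Cmod_sub_le z w). replace (z - w) with (- (w - z)) in H by ring. rewrite Cmod_opp in H. lra. }
  assert (Hwn : w <> 0) by (intros E; rewrite E, Cmod_0 in Hw0; lra).
  replace (/ w - / z - - / (z * z) * (w - z)) with ((w - z) * (w - z) / (z * z * w)) by (field; auto).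
  assert (Hz3 : (0 < Cmod z ^ 3)%R) by (apply pow_lt; auto).
  assert (Hden : (Cmod z ^ 3 / 2 <= Cmod (z * z * w))%R).
  { rewrite !Cmod_mult. replace (Cmod z ^ 3 / 2)%R with (Cmod z * Cmod z * (Cmod z / 2))%R by field.
    apply Rmult_le_compat_l; nra. }
  rewrite Cmod_div by (repeat apply Cmult_neq_0; auto). rewrite Cmod_mult.
  pose proof (Cmod_ge_0 (w - z)).
  apply Rle_trans with (Cmod (w - z) * Cmod (w - z) / (Cmod z ^ 3 / 2))%R.
  - unfold Rdiv. apply Rmult_le_compat_l; [nra|]. apply Rinv_le_contravar; lra.
  - apply Rmult_le_reg_r with (Cmod z ^ 3 / 2)%R; [lra|].
    replace (Cmod (w - z) * Cmod (w - z) / (Cmod z ^ 3 / 2) * (Cmod z ^ 3 / 2))%R with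
      (Cmod (w - z) * Cmod (w - z))%R by (field; lra).
    replace (eps * Cmod (w - z) * (Cmod z ^ 3 / 2))%R with (Cmod (w - z) * (eps * Cmod z ^ 3 / 2))%R by field.
    apply Rmult_le_compat_l; auto.
Qed.

Lemma is_cderiv_exp_div (k c d z : C) : z + d <> 0 ->
  exists L, is_cderiv (fun w => k * cexp (w * c) * / (w + d)) z L.
Proof.
  intros Hz. eexists. apply is_cderiv_mult.
  - apply is_cderiv_mult; [apply is_cderiv_const|].
    apply (is_cderiv_comp cexp (fun w => w * c)); [apply is_cderiv_cexp|].
    apply is_cderiv_mult; [apply is_cderiv_id | apply is_cderiv_const].
  - apply (is_cderiv_comp (fun w => / w) (fun w => w + d)); [apply is_cderiv_Cinv, Hz|].
    apply is_cderiv_plus; [apply is_cderiv_id | apply is_cderiv_const].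
Qed.

Lemma Cmod_div_sub_le (X h L : C) (e : R) : h <> 0 ->
  (Cmod (X - L * h) <= e * Cmod h)%R -> (Cmod (X / h - L) <= e)%R.
Proof.
  intros Hh H. assert (Hp : (0 < Cmod h)%R) by (apply Cmod_gt_0; auto).
  replace (X / h - L) with ((X - L * h) / h) by (field; auto).
  rewrite Cmod_div by auto. apply Rmult_le_reg_r with (Cmod h); auto.
  unfold Rdiv. rewrite Rmult_assoc, Rinv_l, Rmult_1_r by lra. exact H.
Qed.

Lemma Cmod_sub_mult_le (X h L : C) (e : R) : h <> 0 ->
  (Cmod (X / h - L) <= e)%R -> (Cmod (X - L * h) <= e * Cmod h)%R.
Proof.
  intros Hh H. replace (X - L * h) with ((X / h - L) * h) by (field; auto).
  rewrite Cmod_mult. apply Rmult_le_compat_r; auto using Cmod_ge_0.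
Qed.

Lemma exists_point_near (z : C) (eta : R) : (0 < eta)%R -> exists w, w <> z /\ (Cmod (w - z) < eta)%R.
Proof.
  intros He. exists (z + RtoC (eta / 2)). split.
  - intros E. assert (RtoC (eta / 2) = 0) as H0 by (replace (RtoC (eta / 2)) with (z + RtoC (eta / 2) - z) by ring;
      rewrite E; ring).
    injection H0. lra.
  - replace (z + RtoC (eta / 2) - z) with (RtoC (eta / 2)) by ring. rewrite Cmod_R, Rabs_pos_eq; lra.
Qed.

Lemma is_cderiv_quotient f z L : is_cderiv f z L -> forall e, (0 < e)%R -> exists et, (0 < et)%R /\
  forall w, w <> z -> (Cmod (w - z) < et)%R -> (Cmod ((f w - f z) / (w - z) - L) <= e)%R.
Proof.
  intros Hf e He. destruct (Hf e He) as [et [Het Hw]]. exists et. split; auto.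
  intros w Hwz Hw'. apply Cmod_div_sub_le; [apply Cminus_neq0, Hwz | apply Hw, Hw'].
Qed.

(* Moore-Osgood: if the difference quotients of [F n] at [z0] converge uniformly to those of [G],
   the derivatives of [F n] at [z0] form a Cauchy sequence and their limit is a derivative of [G]. *)
Section UniformLimitDerivative.

Variables (F : nat -> C -> C) (G : C -> C) (D : nat -> C) (z0 : C) (eta B : R) (N : nat).
Hypothesis eta_pos : (0 < eta)%R.
Hypothesis N_ge1 : (1 <= N)%nat.
Hypothesis F_deriv : forall n, is_cderiv (F n) z0 (D n).
Hypothesis quotients_uniform : forall w, w <> z0 -> (Cmod (w - z0) < eta)%R -> forall n, (N <= n)%nat ->
  (Cmod ((G w - G z0) / (w - z0) - (F n w - F n z0) / (w - z0)) <= B / INR n)%R.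

Let Q n w := (F n w - F n z0) / (w - z0).
Let Gq w := (G w - G z0) / (w - z0).

Lemma uniform_limit_derivatives_cauchy n m : (N <= n)%nat -> (N <= m)%nat ->
  (Cmod (D n - D m) <= B / INR n + B / INR m)%R.
Proof.
  intros Hn Hm. apply le_epsilon. intros e He.
  destruct (is_cderiv_quotient _ _ _ (F_deriv n) (e/2)%R ltac:(lra)) as [e1 [He1 H1]].
  destruct (is_cderiv_quotient _ _ _ (F_deriv m) (e/2)%R ltac:(lra)) as [e2 [He2 H2]].
  destruct (exists_point_near z0 (Rmin eta (Rmin e1 e2)) ltac:(repeat apply Rmin_pos; lra)) as [w [Hwz Hw]].
  pose proof (Rmin_l eta (Rmin e1 e2)). pose proof (Rmin_r eta (Rmin e1 e2)).
  pose proof (Rmin_l e1 e2). pose proof (Rmin_r e1 e2).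
  specialize (H1 w Hwz ltac:(lra)). specialize (H2 w Hwz ltac:(lra)).
  change (Cmod (Q n w - D n) <= e / 2)%R in H1. change (Cmod (Q m w - D m) <= e / 2)%R in H2.
  pose proof (quotients_uniform w Hwz ltac:(lra) n Hn) as H5.
  pose proof (quotients_uniform w Hwz ltac:(lra) m Hm) as H6.
  change (Cmod (Gq w - Q n w) <= B / INR n)%R in H5. change (Cmod (Gq w - Q m w) <= B / INR m)%R in H6.
  replace (D n - D m) with (- (Q n w - D n) - (Gq w - Q n w) + (Gq w - Q m w) + (Q m w - D m)) by ring.
  pose proof (Cmod_triangle (- (Q n w - D n) - (Gq w - Q n w) + (Gq w - Q m w)) (Q m w - D m)).
  pose proof (Cmod_triangle (- (Q n w - D n) - (Gq w - Q n w)) (Gq w - Q m w)).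
  assert (Cmod (- (Q n w - D n) - (Gq w - Q n w)) <= Cmod (Q n w - D n) + Cmod (Gq w - Q n w))%R
    by (rewrite <- (Cmod_opp (Q n w - D n)), <- (Cmod_opp (Gq w - Q n w)); apply Cmod_triangle).
  lra.
Qed.

Lemma is_cderiv_uniform_limit : exists L, is_cderiv G z0 L.
Proof.
  destruct (cauchy_rate D N B N_ge1 uniform_limit_derivatives_cauchy) as [L HL].
  exists L. intros e He.
  destruct (eventually_div_le (3 * B) (e / 2) N ltac:(lra) N_ge1) as [n [Hn1 Hn2]].
  specialize (Hn2 n (le_n n)).
  destruct (is_cderiv_quotient _ _ _ (F_deriv n) (e / 2)%R ltac:(lra)) as [et [Het Hq]].
  exists (Rmin eta et). split; [apply Rmin_pos; auto|].
  intros w Hw. pose proof (Rmin_l eta et). pose proof (Rmin_r eta et).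
  destruct (Ceq_dec w z0) as [->|Hwz].
  { replace (G z0 - G z0 - L * (z0 - z0)) with (RtoC 0) by ring. rewrite Cmod_0.
    pose proof (Cmod_ge_0 (z0 - z0)). nra. }
  apply Cmod_sub_mult_le; [apply Cminus_neq0, Hwz|].
  pose proof (quotients_uniform w Hwz ltac:(lra) n Hn1) as H1. pose proof (Hq w Hwz ltac:(lra)).
  pose proof (HL n Hn1).
  change (Cmod (Gq w - L) <= e)%R. change (Cmod (Gq w - Q n w) <= B / INR n)%R in H1.
  change (Cmod (Q n w - D n) <= e / 2)%R in H2.
  replace (Gq w - L) with ((Gq w - Q n w) + (Q n w - D n) - (L - D n)) by ring.
  eapply Rle_trans; [apply Cmod_triangle|]. rewrite Cmod_opp.
  eapply Rle_trans; [apply Rplus_le_compat_r, Cmod_triangle|].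
  assert (0 < INR n)%R by (apply lt_0_INR; lia).
  replace (3 * B / INR n)%R with (B / INR n + 2 * B / INR n)%R in Hn2 by (field; lra).
  lra.
Qed.

End UniformLimitDerivative.

(** * Gauss's product for the Gamma function *)

Definition off_poles (w : C) : Prop := forall j : nat, w + RtoC (INR j) <> 0.

Lemma off_poles_add_nat w k : off_poles w -> off_poles (w + RtoC (INR k)).
Proof.
  intros H j. replace (w + RtoC (INR k) + RtoC (INR j)) with (w + RtoC (INR (k + j))). apply H.
  rewrite plus_INR. apply injective_projections; simpl; ring.
Qed.

Lemma off_poles_succ w : off_poles w -> off_poles (w + 1).
Proof. intros H. exact (off_poles_add_nat w 1 H). Qed.

Lemma off_poles_neq0 z : off_poles z -> z <> 0.
Proof. intros H E. apply (H 0%nat). rewrite E. apply injective_projections; simpl; ring. Qed.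

Lemma off_poles_open z : off_poles z -> exists d, (0 < d)%R /\ forall w, (Cmod (w - z) < d)%R -> off_poles w.
Proof.
  intros Hz. destruct (exists_nat_ge (Cmod z + 1)) as [J HJ].
  assert (Hmin : forall J, exists d, (0 < d)%R /\ forall j, (j < J)%nat -> (d <= Cmod (z + RtoC (INR j)))%R).
  { induction J0 as [|J0 [d [Hd Hj]]].
    - exists 1%R. split; [lra | intros j Hj; lia].
    - exists (Rmin d (Cmod (z + RtoC (INR J0)))). split.
      + apply Rmin_pos; auto. apply Cmod_gt_0, Hz.
      + intros j Hj'. destruct (Nat.eq_dec j J0) as [->|Hne]; [apply Rmin_r|].
        eapply Rle_trans; [apply Rmin_l | apply Hj; lia]. }
  destruct (Hmin J) as [d [Hd Hdj]].
  exists (Rmin d 1). split; [apply Rmin_pos; lra|]. intros w Hw j E.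
  pose proof (Rmin_l d 1). pose proof (Rmin_r d 1).
  destruct (Nat.lt_ge_cases j J) as [Hj|Hj].
  - specialize (Hdj j Hj). pose proof (Cmod_sub_le (z + RtoC (INR j)) (w + RtoC (INR j))).
    replace (z + RtoC (INR j) - (w + RtoC (INR j))) with (- (w - z)) in H1 by ring.
    rewrite Cmod_opp, E, Cmod_0 in H1. lra.
  - assert (HjJ : (INR J <= INR j)%R) by (apply le_INR; auto).
    pose proof (Cmod_sub_le (RtoC (INR j)) (- w)).
    replace (RtoC (INR j) - - w) with (w + RtoC (INR j)) in H1 by ring.
    rewrite E, Cmod_0, Cmod_opp, Cmod_R, Rabs_pos_eq in H1 by apply pos_INR.
    pose proof (Cmod_sub_le w z). lra.
Qed.

Definition gauss_denom (n : nat) (w : C) : C :=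
  fold_right Cmult (RtoC 1) (map (fun j => w + RtoC (INR j)) (List.seq 0 (S n))).

Lemma gauss_seq_eq w n : gauss_seq w n = RtoC (INR (Factorial.fact n)) * nat_cpow n w / gauss_denom n w.
Proof. reflexivity. Qed.

Lemma fold_right_Cmult_acc (l : list C) (a : C) : fold_right Cmult a l = fold_right Cmult 1 l * a.
Proof. induction l; simpl; [ring | rewrite IHl; ring]. Qed.

Lemma gauss_denom_0 w : gauss_denom 0 w = w.
Proof. unfold gauss_denom. simpl. rewrite Cmult_1_r. apply injective_projections; simpl; ring. Qed.

Lemma gauss_denom_S n w : gauss_denom (S n) w = gauss_denom n w * (w + RtoC (INR (S n))).
Proof.
  unfold gauss_denom. rewrite (seq_S (S n) 0), map_app, fold_right_app. simpl.
  rewrite fold_right_Cmult_acc. ring.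
Qed.

Lemma gauss_denom_neq0 n w : off_poles w -> gauss_denom n w <> 0.
Proof.
  intros H. induction n.
  - rewrite gauss_denom_0. apply off_poles_neq0, H.
  - rewrite gauss_denom_S. apply Cmult_neq_0; [apply IHn | apply H].
Qed.

Lemma gauss_seq_neq0 w n : off_poles w -> gauss_seq w n <> 0.
Proof.
  intros H E. rewrite gauss_seq_eq in E. pose proof (gauss_denom_neq0 n w H).
  apply (Cmult_neq_0 _ _ (RtoC_neq0 _ (INR_fact_neq_0 n)) (cexp_neq0 (w * RtoC (ln (INR n))))).
  change (cexp (w * RtoC (ln (INR n)))) with (nat_cpow n w).
  replace (RtoC (INR (Factorial.fact n)) * nat_cpow n w)
    with (RtoC (INR (Factorial.fact n)) * nat_cpow n w / gauss_denom n w * gauss_denom n w) by (field; auto).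
  rewrite E. ring.
Qed.

Definition log_step (m : nat) : R := (ln (INR (S m)) - ln (INR m))%R.

Definition gauss_factor (m : nat) (w : C) : C :=
  RtoC (INR (S m)) * cexp (w * RtoC (log_step m)) / (w + RtoC (INR (S m))).

Lemma gauss_seq_S w m : off_poles w -> gauss_seq w (S m) = gauss_seq w m * gauss_factor m w.
Proof.
  intros H. rewrite !gauss_seq_eq. unfold gauss_factor, nat_cpow.
  replace (w * RtoC (ln (INR (S m)))) with (w * RtoC (ln (INR m)) + w * RtoC (log_step m))
    by (unfold log_step; apply injective_projections; simpl; ring).
  rewrite gauss_denom_S, cexp_plus.
  change (Factorial.fact (S m)) with (S m * Factorial.fact m)%nat. rewrite mult_INR, RtoC_mult.
  pose proof (gauss_denom_neq0 m w H). pose proof (H (S m)).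
  field. split; auto.
Qed.

Lemma ln_1_plus_le (y : R) : (0 < 1 + y)%R -> (ln (1 + y) <= y)%R.
Proof. intros H. rewrite <- (ln_exp y) at 2. apply ln_le; [lra | apply exp_ineq1_le]. Qed.

Lemma log_step_bounds m : (1 <= m)%nat -> (/ INR (S m) <= log_step m <= / INR m)%R.
Proof.
  intros Hm. unfold log_step. rewrite S_INR. assert (Hx : (1 <= INR m)%R) by (apply (le_INR 1); lia).
  assert (0 < / (INR m + 1) < 1)%R.
  { split; [apply Rinv_0_lt_compat; lra|]. rewrite <- Rinv_1. apply Rinv_lt_contravar; lra. }
  split.
  - assert (E : (ln (INR m) - ln (INR m + 1) = ln (1 + (- / (INR m + 1))))%R).
    { rewrite <- ln_div by lra. f_equal. field. lra. }
    pose proof (ln_1_plus_le (- / (INR m + 1))). lra.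
  - assert (E : (ln (INR m + 1) - ln (INR m) = ln (1 + / INR m))%R).
    { rewrite <- ln_div by lra. f_equal. field. lra. }
    rewrite E. apply ln_1_plus_le. pose proof (Rinv_0_lt_compat (INR m)). lra.
Qed.

Lemma gauss_factor_sub1_eq m w : (1 <= m)%nat -> 1 + w * RtoC (/ INR (S m)) <> 0 ->
  gauss_factor m w - 1 =
  (cexp_rem (w * RtoC (log_step m)) + w * RtoC (log_step m - / INR (S m))) / (1 + w * RtoC (/ INR (S m))).
Proof.
  intros Hm HD. unfold gauss_factor, cexp_rem.
  assert (HS : (INR (S m) <> 0)%R) by (apply not_0_INR; lia).
  assert (Hw : w + RtoC (INR (S m)) <> 0).
  { replace (w + RtoC (INR (S m))) with (RtoC (INR (S m)) * (1 + w * RtoC (/ INR (S m)))).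
    - apply Cmult_neq_0; auto. apply RtoC_neq0; auto.
    - rewrite RtoC_inv by auto. field. apply RtoC_neq0; auto. }
  rewrite RtoC_minus, RtoC_inv by auto. rewrite RtoC_inv in HD by auto.
  field. repeat split; auto; [apply RtoC_neq0; auto | rewrite Cplus_comm; auto].
Qed.

(* For [|w| <= Rad] and [m] beyond an explicit threshold, [gauss_factor m w - 1] is O(1/m^2), with
   an O(1/m^2) Lipschitz constant in [w]; the explicit constants are crude. *)
Section GaussFactorEstimates.

Variables (Rad : R) (m : nat).
Hypothesis Rad_ge0 : (0 <= Rad)%R.
Hypothesis m_large : (800 * (Rad + 1) ^ 2 <= INR m)%R.

Let a := log_step m.
Let b := (/ INR (S m))%R.
Let c := inv_step m.
Let num (w : C) := cexp_rem (w * RtoC a) + w * RtoC (a - b).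
Let den (w : C) := 1 + w * RtoC b.

Lemma gauss_threshold_ge1 : (1 <= m)%nat.
Proof. destruct m; [simpl in m_large; nra | lia]. Qed.

Lemma gauss_step_bounds : (0 < b <= a /\ 0 <= a - b <= c /\ a ^ 2 <= 2 * c /\ c <= / INR m /\ Rad * a <= 1/4)%R.
Proof.
  pose proof gauss_threshold_ge1 as Hm. destruct (log_step_bounds m Hm) as [Hb Ha]. fold a b in Hb, Ha.
  assert (Hx : (1 <= INR m)%R) by (apply (le_INR 1); lia).
  assert (Hc : c = (/ INR m - b)%R) by reflexivity.
  assert (Hb0 : (0 < b)%R) by (apply Rinv_0_lt_compat, lt_0_INR; lia).
  assert (Hbm : (b = / (INR m + 1))%R) by (unfold b; rewrite S_INR; reflexivity).
  repeat split; try lra.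
  - apply Rle_trans with ((/ INR m) ^ 2)%R; [apply pow_incr; lra|].
    rewrite Hc, Hbm.
    replace (2 * (/ INR m - / (INR m + 1)))%R with (/ (INR m * ((INR m + 1) / 2)))%R by (field; lra).
    replace ((/ INR m) ^ 2)%R with (/ (INR m * INR m))%R by (field; lra).
    apply Rinv_le_contravar; nra.
  - apply Rle_trans with (Rad * / INR m)%R; [apply Rmult_le_compat_l; lra|].
    apply Rmult_le_reg_r with (INR m); [lra|]. rewrite Rmult_assoc, Rinv_l by lra. nra.
Qed.

Lemma inv_step_scaled_le_half : (400 * (Rad + 1) ^ 2 * inv_step m <= 1/2)%R.
Proof.
  destruct gauss_step_bounds as [_ [[_ Hc] [_ [Hcm _]]]]. fold c.
  pose proof gauss_threshold_ge1 as Hm. assert (Hx : (1 <= INR m)%R) by (apply (le_INR 1); lia).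
  apply Rle_trans with (400 * (Rad + 1) ^ 2 * / INR m)%R; [apply Rmult_le_compat_l; nra|].
  apply Rmult_le_reg_r with (INR m); [lra|]. rewrite Rmult_assoc, Rinv_l by lra. lra.
Qed.

Lemma gauss_den_bounds w : (Cmod w <= Rad)%R -> (3/4 <= Cmod (den w) <= 5/4)%R.
Proof.
  intros Hw. destruct gauss_step_bounds as [[Hb Hba] [_ [_ [_ HRa]]]].
  assert (Cmod (w * RtoC b) <= 1/4)%R.
  { eapply Rle_trans; [apply (Cmod_mult_RtoC_le Rad); auto; lra|]. nra. }
  unfold den. split.
  - pose proof (Cmod_sub_le 1 (1 + w * RtoC b)).
    replace (1 - (1 + w * RtoC b)) with (- (w * RtoC b)) in H0 by ring.
    rewrite Cmod_1, Cmod_opp in H0. lra.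
  - pose proof (Cmod_triangle 1 (w * RtoC b)). rewrite Cmod_1 in H0. lra.
Qed.

Lemma gauss_den_neq0 w : (Cmod w <= Rad)%R -> den w <> 0.
Proof. intros Hw E. destruct (gauss_den_bounds w Hw). rewrite E, Cmod_0 in H. lra. Qed.

Lemma gauss_num_le w : (Cmod w <= Rad)%R -> (Cmod (num w) <= (6 * Rad ^ 2 + Rad) * c)%R.
Proof.
  intros Hw. destruct gauss_step_bounds as [[Hb Hba] [[Hab0 Hab] [Ha2 [_ HRa]]]].
  unfold num. eapply Rle_trans; [apply Cmod_triangle|].
  pose proof (Cmod_mult_RtoC_le Rad w a Hw ltac:(lra)). pose proof (Cmod_ge_0 (w * RtoC a)).
  pose proof (Cmod_cexp_rem_le (w * RtoC a) ltac:(lra)).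
  pose proof (Cmod_mult_RtoC_le Rad w (a - b) Hw Hab0).
  assert (Cmod (w * RtoC a) ^ 2 <= (Rad * a) ^ 2)%R by (apply pow_incr; lra).
  assert (Rad ^ 2 * a ^ 2 <= Rad ^ 2 * (2 * c))%R by (apply Rmult_le_compat_l; nra).
  assert (Rad * (a - b) <= Rad * c)%R by (apply Rmult_le_compat_l; lra).
  nra.
Qed.

Lemma gauss_num_sub_le w v : (Cmod w <= Rad)%R -> (Cmod v <= Rad)%R ->
  (Cmod (num w - num v) <= (30 * Rad + 1) * c * Cmod (w - v))%R.
Proof.
  intros Hw Hv. destruct gauss_step_bounds as [[Hb Hba] [[Hab0 Hab] [Ha2 [_ HRa]]]].
  set (d := Cmod (w - v)).
  assert (Hd : (d <= 2 * Rad)%R).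
  { unfold d. eapply Rle_trans; [apply (Cmod_triangle w (- v))|]. rewrite Cmod_opp. lra. }
  assert (Hd0 : (0 <= d)%R) by apply Cmod_ge_0.
  unfold num. replace (cexp_rem (w * RtoC a) + w * RtoC (a - b) - (cexp_rem (v * RtoC a) + v * RtoC (a - b)))
    with ((cexp_rem (w * RtoC a) - cexp_rem (v * RtoC a)) + (w - v) * RtoC (a - b)) by ring.
  eapply Rle_trans; [apply Cmod_triangle|].
  pose proof (Cmod_mult_RtoC_le Rad v a Hv ltac:(lra)).
  assert (Hwv : Cmod (w * RtoC a - v * RtoC a) = (d * a)%R).
  { replace (w * RtoC a - v * RtoC a) with ((w - v) * RtoC a) by ring.
    rewrite Cmod_mult, Cmod_R, Rabs_pos_eq by lra. reflexivity. }
  assert (HdA : (d * a <= 2 * Rad * a)%R) by (apply Rmult_le_compat_r; lra).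
  pose proof (Cmod_cexp_rem_sub_le (w * RtoC a) (v * RtoC a) ltac:(lra) ltac:(rewrite Hwv; lra)) as Hrem.
  rewrite Hwv in Hrem.
  rewrite Cmod_mult, Cmod_R, (Rabs_pos_eq (a - b)) by lra. fold d.
  pose proof (Cmod_ge_0 (v * RtoC a)).
  assert (9 * Cmod (v * RtoC a) * (d * a) <= 9 * (Rad * a) * (d * a))%R by (apply Rmult_le_compat_r; nra).
  assert (3 * (d * a) ^ 2 <= 3 * (2 * Rad * a) * (d * a))%R.
  { replace ((d * a) ^ 2)%R with ((d * a) * (d * a))%R by ring.
    assert ((d * a) * (d * a) <= (2 * Rad * a) * (d * a))%R by (apply Rmult_le_compat_r; nra). lra. }
  assert (15 * Rad * a^2 * d <= 15 * Rad * (2 * c) * d)%R.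
  { apply Rmult_le_compat_r; auto. apply Rmult_le_compat_l; nra. }
  assert (d * (a - b) <= d * c)%R by (apply Rmult_le_compat_l; lra).
  nra.
Qed.

Lemma gauss_factor_sub1_eq_num_den w : (Cmod w <= Rad)%R -> gauss_factor m w - 1 = num w / den w.
Proof. intros Hw. apply gauss_factor_sub1_eq; [apply gauss_threshold_ge1 | apply (gauss_den_neq0 w Hw)]. Qed.

Lemma Cmod_gauss_factor_sub1_le w : (Cmod w <= Rad)%R ->
  (Cmod (gauss_factor m w - 1) <= 400 * (Rad + 1) ^ 2 * inv_step m)%R.
Proof.
  intros Hw. rewrite gauss_factor_sub1_eq_num_den by auto.
  destruct (gauss_den_bounds w Hw). pose proof (gauss_num_le w Hw).
  pose proof (inv_step_pos m gauss_threshold_ge1) as Hc0. fold c in Hc0.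
  rewrite Cmod_div by (apply gauss_den_neq0; auto).
  apply Rle_trans with ((6 * Rad ^ 2 + Rad) * c / (3/4))%R.
  - unfold Rdiv. apply Rmult_le_compat; [apply Cmod_ge_0 | left; apply Rinv_0_lt_compat; lra | auto |].
    apply Rinv_le_contravar; lra.
  - fold c. nra.
Qed.

Lemma Cmod_gauss_factor_sub1_sub_le w v : (Cmod w <= Rad)%R -> (Cmod v <= Rad)%R ->
  (Cmod ((gauss_factor m w - 1) - (gauss_factor m v - 1))
     <= 400 * (Rad + 1) ^ 2 * inv_step m * Cmod (w - v))%R.
Proof.
  intros Hw Hv. rewrite !gauss_factor_sub1_eq_num_den by auto.
  pose proof (gauss_den_neq0 w Hw). pose proof (gauss_den_neq0 v Hv).
  destruct (gauss_den_bounds w Hw). destruct (gauss_den_bounds v Hv).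
  destruct gauss_step_bounds as [[Hb Hba] [_ [_ [Hcm HRa]]]].
  pose proof (gauss_num_le v Hv). pose proof (gauss_num_sub_le w v Hw Hv).
  pose proof (inv_step_pos m gauss_threshold_ge1) as Hc0. fold c in Hc0.
  set (d := Cmod (w - v)) in *. assert (Hd0 : (0 <= d)%R) by apply Cmod_ge_0.
  assert (Hb2 : (b <= 1/2)%R).
  { unfold b. rewrite S_INR. pose proof gauss_threshold_ge1. assert (1 <= INR m)%R by (apply (le_INR 1); lia).
    apply Rmult_le_reg_r with (INR m + 1)%R; [lra|]. rewrite Rinv_l by lra. lra. }
  replace (num w / den w - num v / den v) with
    (((num w - num v) * den v - num v * ((w - v) * RtoC b)) / (den w * den v)) by (unfold den; field; auto).
  rewrite Cmod_div by (apply Cmult_neq_0; auto). rewrite Cmod_mult.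
  assert (Hnum : (Cmod ((num w - num v) * den v - num v * ((w - v) * RtoC b))
                  <= (30 * Rad + 1) * c * d * (5/4) + (6 * Rad ^ 2 + Rad) * c * (d * (1/2)))%R).
  { eapply Rle_trans; [apply (Cmod_triangle _ (- _))|]. rewrite Cmod_opp, !Cmod_mult, Cmod_R, Rabs_pos_eq by lra.
    fold d. apply Rplus_le_compat; apply Rmult_le_compat; auto using Cmod_ge_0; nra. }
  apply Rle_trans with (((30 * Rad + 1) * c * d * (5/4) + (6 * Rad ^ 2 + Rad) * c * (d * (1/2))) / (9/16))%R.
  - unfold Rdiv. apply Rmult_le_compat; [apply Cmod_ge_0 | left; apply Rinv_0_lt_compat; nra | auto |].
    apply Rinv_le_contravar; nra.
  - fold c. assert (0 <= c * d)%R by nra. nra.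
Qed.

End GaussFactorEstimates.

Lemma CGamma_eq z l : filterlim (gauss_seq z) eventually (locally l) -> CGamma z = l.
Proof.
  intros H. unfold CGamma.
  set (P := fun l0 : C => filterlim (gauss_seq z) eventually (locally l0)).
  assert (Hs : P (epsilon (inhabits (RtoC 0)) P)) by (apply epsilon_spec; exists l; exact H).
  exact (@filterlim_locally_unique nat C_AbsRing C_NormedModule eventually _ (gauss_seq z) _ _ Hs H).
Qed.

Lemma exists_gauss_threshold (Rad : R) : exists M, (1 <= M)%nat /\ (800 * (Rad + 1) ^ 2 <= INR M)%R.
Proof.
  destruct (exists_nat_ge (800 * (Rad + 1) ^ 2)) as [M HM]. exists (S M). split; [lia|].
  rewrite S_INR. lra.
Qed.

Lemma gauss_seq_step w Rad M : off_poles w -> (Cmod w <= Rad)%R -> (800 * (Rad + 1) ^ 2 <= INR M)%R ->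
  forall m, (M <= m)%nat ->
  gauss_seq w (S m) = gauss_seq w m * (1 + (gauss_factor m w - 1)) /\
  (Cmod (gauss_factor m w - 1) <= 400 * (Rad + 1) ^ 2 * inv_step m)%R /\
  (400 * (Rad + 1) ^ 2 * inv_step m <= 1/2)%R.
Proof.
  intros Hw HwR HM m Hm. assert (HR : (0 <= Rad)%R) by (pose proof (Cmod_ge_0 w); lra).
  assert (Hm' : (800 * (Rad + 1) ^ 2 <= INR m)%R) by (pose proof (le_INR _ _ Hm); lra).
  split; [rewrite gauss_seq_S by auto; ring|].
  split; [apply Cmod_gauss_factor_sub1_le | apply inv_step_scaled_le_half]; auto.
Qed.

Lemma gauss_seq_cvg w : off_poles w -> CGamma w <> 0 /\
  exists N A, (1 <= N)%nat /\ forall n, (N <= n)%nat -> (Cmod (CGamma w - gauss_seq w n) <= A / INR n)%R.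
Proof.
  intros Hw. destruct (exists_gauss_threshold (Cmod w)) as [M [HM1 HM]].
  pose proof (gauss_seq_step w (Cmod w) M Hw (Rle_refl _) HM) as Hstep.
  assert (HK : (0 <= 400 * (Cmod w + 1) ^ 2)%R) by (pose proof (pow2_ge_0 (Cmod w + 1)); lra).
  destruct (product_cvg (gauss_seq w) (fun m => gauss_factor m w - 1) _ M HM1 HK) as [_ [l Hl]].
  { intros m Hm. destruct (Hstep m Hm) as [E [Hs _]]. split; assumption. }
  assert (E : CGamma w = l) by (apply CGamma_eq, (filterlim_of_rate _ _ M _ Hl)).
  rewrite E. split; [|eexists M, _; split; [exact HM1 | exact Hl]].
  exact (product_limit_neq0 _ _ _ M l _ HM1 HK Hstep (gauss_seq_neq0 w M Hw) Hl).
Qed.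

Lemma CGamma_neq0 w : off_poles w -> CGamma w <> 0.
Proof. intros Hw. apply (gauss_seq_cvg w Hw). Qed.

Lemma gauss_denom_succ n w : gauss_denom (S n) w = w * gauss_denom n (w + 1).
Proof.
  induction n.
  - rewrite gauss_denom_S, !gauss_denom_0. simpl. ring.
  - rewrite gauss_denom_S, IHn, (gauss_denom_S n (w + 1)), !S_INR, !RtoC_plus. ring.
Qed.

Lemma gauss_seq_succ w n : off_poles w -> (1 <= n)%nat ->
  gauss_seq (w + 1) n = gauss_seq w n * (w * RtoC (INR n) / (w + RtoC (INR (S n)))).
Proof.
  intros Hw Hn. rewrite !gauss_seq_eq.
  assert (Ep : nat_cpow n (w + 1) = nat_cpow n w * RtoC (INR n)).
  { unfold nat_cpow.
    replace ((w + 1) * RtoC (ln (INR n))) with (w * RtoC (ln (INR n)) + RtoC (ln (INR n))) by ring.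
    rewrite cexp_plus, cexp_RtoC, exp_ln by (apply lt_0_INR; lia). reflexivity. }
  pose proof (off_poles_neq0 w Hw). pose proof (gauss_denom_neq0 n w Hw). pose proof (Hw (S n)).
  assert (Ed : gauss_denom n (w + 1) = gauss_denom n w * (w + RtoC (INR (S n))) / w)
    by (rewrite <- gauss_denom_S, gauss_denom_succ; field; auto).
  rewrite Ep, Ed. field. auto.
Qed.

Lemma Cmod_succ_factor_sub_le w n : (1 <= n)%nat -> (2 * Cmod w <= INR n)%R ->
  (Cmod (w - w * RtoC (INR n) / (w + RtoC (INR (S n)))) <= 2 * (Cmod w * Cmod (w + 1)) / INR n)%R.
Proof.
  intros Hn1 Hn. assert (Hn0 : (0 < INR n)%R) by (apply lt_0_INR; lia).
  assert (Hden : (INR n / 2 <= Cmod (w + RtoC (INR (S n))))%R).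
  { pose proof (Cmod_sub_le (RtoC (INR (S n))) (- w)).
    replace (RtoC (INR (S n)) - - w) with (w + RtoC (INR (S n))) in H by ring.
    rewrite Cmod_opp, Cmod_R, Rabs_pos_eq in H by apply pos_INR. pose proof (S_INR n). lra. }
  assert (Hden0 : w + RtoC (INR (S n)) <> 0) by (intros E; rewrite E, Cmod_0 in Hden; lra).
  replace (w - w * RtoC (INR n) / (w + RtoC (INR (S n)))) with (w * (w + 1) / (w + RtoC (INR (S n)))).
  2:{ rewrite S_INR, RtoC_plus in *. field. auto. }
  rewrite Cmod_div, Cmod_mult by auto.
  apply Rle_trans with (Cmod w * Cmod (w + 1) / (INR n / 2))%R.
  - unfold Rdiv. apply Rmult_le_compat_l; [apply Rmult_le_pos; apply Cmod_ge_0|].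
    apply Rinv_le_contravar; lra.
  - right. field. lra.
Qed.

Lemma CGamma_succ w : off_poles w -> CGamma (w + 1) = w * CGamma w.
Proof.
  intros Hw. destruct (gauss_seq_cvg w Hw) as [_ [N1 [A1 [HN1 H1]]]].
  destruct (gauss_seq_cvg (w + 1) (off_poles_succ w Hw)) as [_ [N2 [A2 [HN2 H2]]]].
  destruct (exists_nat_ge (2 * Cmod w)) as [N3 HN3].
  set (N := max (max N1 N2) (max N3 1)).
  assert (Hr : forall n, (N <= n)%nat ->
     (Cmod (w - w * RtoC (INR n) / (w + RtoC (INR (S n)))) <= 2 * (Cmod w * Cmod (w + 1)) / INR n)%R).
  { intros n Hn. apply Cmod_succ_factor_sub_le; [lia|]. pose proof (le_INR N3 n ltac:(lia)). lra. }
  rewrite Cmult_comm.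
  apply (rate_unique _ _ (fun n => gauss_seq (w + 1) n) N A2
           ((A1 * Cmod w + (Cmod (CGamma w) + A1) * (2 * (Cmod w * Cmod (w + 1))))%R)).
  - intros n Hn. apply H2. lia.
  - intros n Hn. rewrite gauss_seq_succ by (auto; lia).
    exact (rate_mult (CGamma w) w (gauss_seq w) (fun k => w * RtoC (INR k) / (w + RtoC (INR (S k))))
             N A1 _ ltac:(lia) ltac:(intros k Hk; apply H1; lia) Hr n Hn).
Qed.

Fixpoint poch (a : C) (k : nat) : C :=
  match k with 0 => 1 | S k => poch a k * (a + RtoC (INR k)) end.

Lemma CGamma_add_nat w k : off_poles w -> CGamma (w + RtoC (INR k)) = poch w k * CGamma w.
Proof.
  intros Hw. induction k.
  - simpl. replace (w + RtoC 0) with w by (apply injective_projections; simpl; ring). ring.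
  - simpl poch. replace (w + RtoC (INR (S k))) with ((w + RtoC (INR k)) + 1)
      by (rewrite S_INR; apply injective_projections; simpl; ring).
    rewrite CGamma_succ by (apply off_poles_add_nat; auto). rewrite IHk. ring.
Qed.

(** * Differentiability of Gamma and the digamma recurrence *)

Lemma is_cderiv_gauss_seq z n : off_poles z -> exists L, is_cderiv (fun w => gauss_seq w n) z L.
Proof.
  intros Hz. destruct (off_poles_open z Hz) as [d [Hd HD]]. induction n as [|n [L1 H1]].
  - destruct (is_cderiv_exp_div (RtoC (INR (Factorial.fact 0))) (RtoC (ln (INR 0))) 0 z)
      as [L HL]; [rewrite Cplus_0_r; apply off_poles_neq0, Hz|].
    exists L. eapply is_cderiv_ext_loc; [|exact HL]. exists 1%R. split; [lra|]. intros w _.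
    rewrite gauss_seq_eq, gauss_denom_0, Cplus_0_r. reflexivity.
  - destruct (is_cderiv_exp_div (RtoC (INR (S n))) (RtoC (log_step n)) (RtoC (INR (S n))) z (Hz (S n)))
      as [L2 H2].
    eexists. eapply is_cderiv_ext_loc; [|apply (is_cderiv_mult _ _ _ _ _ H1 H2)].
    exists d. split; auto. intros w Hw. rewrite gauss_seq_S by (apply HD; auto). reflexivity.
Qed.

Lemma gauss_quotient_S z0 w m : off_poles z0 -> off_poles w -> w - z0 <> 0 ->
  (gauss_seq w (S m) - gauss_seq z0 (S m)) / (w - z0) =
  (gauss_seq w m - gauss_seq z0 m) / (w - z0) * (1 + (gauss_factor m w - 1))
  + gauss_seq z0 m * (((gauss_factor m w - 1) - (gauss_factor m z0 - 1)) / (w - z0)).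
Proof. intros Hz0 Hw Hh. rewrite !gauss_seq_S by auto. field. auto. Qed.

Lemma gauss_seq_bounded w Rad M : off_poles w -> (Cmod w <= Rad)%R -> (800 * (Rad + 1) ^ 2 <= INR M)%R ->
  forall n, (M <= n)%nat -> (Cmod (gauss_seq w n) <= Cmod (gauss_seq w M) * exp (400 * (Rad + 1) ^ 2))%R.
Proof.
  intros Hw HwR HM. assert (HR : (0 <= Rad)%R) by (pose proof (Cmod_ge_0 w); lra).
  assert (HK : (0 <= 400 * (Rad + 1) ^ 2)%R) by (pose proof (pow2_ge_0 (Rad + 1)); lra).
  apply (product_cvg (gauss_seq w) (fun m => gauss_factor m w - 1) _ M (gauss_threshold_ge1 Rad M HR HM) HK).
  intros m Hm. destruct (gauss_seq_step w Rad M Hw HwR HM m Hm) as [E [Hs _]]. split; assumption.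
Qed.

Lemma Cmod_gauss_factor_quotient_le w z0 Rad m : w <> z0 -> (Cmod w <= Rad)%R -> (Cmod z0 <= Rad)%R ->
  (800 * (Rad + 1) ^ 2 <= INR m)%R ->
  (Cmod (((gauss_factor m w - 1) - (gauss_factor m z0 - 1)) / (w - z0)) <= 400 * (Rad + 1) ^ 2 * inv_step m)%R.
Proof.
  intros Hwz Hw Hz0 Hm. assert (Hh : (0 < Cmod (w - z0))%R).
  { apply Cmod_gt_0, Cminus_neq0, Hwz. }
  rewrite Cmod_div by (intros E; rewrite E, Cmod_0 in Hh; lra).
  apply Rmult_le_reg_r with (Cmod (w - z0)); [exact Hh|].
  unfold Rdiv. rewrite Rmult_assoc, Rinv_l, Rmult_1_r by lra.
  apply Cmod_gauss_factor_sub1_sub_le; auto. pose proof (Cmod_ge_0 w). lra.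
Qed.

(* The difference quotients of Gauss's sequence at [z0] satisfy the same kind of perturbed product
   recursion as the sequence itself, with constants uniform near [z0]. *)
Lemma gauss_quotient_uniform z0 : off_poles z0 -> exists eta B N, (0 < eta)%R /\ (1 <= N)%nat /\
  forall w, w <> z0 -> (Cmod (w - z0) < eta)%R -> forall n, (N <= n)%nat ->
  (Cmod ((CGamma w - CGamma z0) / (w - z0) - (gauss_seq w n - gauss_seq z0 n) / (w - z0)) <= B / INR n)%R.
Proof.
  intros Hz0. destruct (off_poles_open z0 Hz0) as [dl [Hdl HD]].
  set (Rad := (Cmod z0 + 1)%R). set (K := (400 * (Rad + 1) ^ 2)%R).
  assert (Hz0R : (Cmod z0 <= Rad)%R) by (unfold Rad; lra).
  assert (HK : (0 <= K)%R) by (unfold K; pose proof (pow2_ge_0 (Rad + 1)); lra).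
  destruct (exists_gauss_threshold Rad) as [M [HM1 HM]].
  set (Mz := (Cmod (gauss_seq z0 M) * exp K)%R).
  assert (HMz : (0 <= Mz)%R) by (unfold Mz; pose proof (Cmod_ge_0 (gauss_seq z0 M)); pose proof (exp_pos K); nra).
  destruct (is_cderiv_gauss_seq z0 M Hz0) as [LM HLM].
  destruct (is_cderiv_quotient _ _ _ HLM 1%R ltac:(lra)) as [eta1 [Heta1 HLM1]].
  exists (Rmin (Rmin dl 1) eta1), (2 * ((Cmod LM + 1 + Mz * K) * exp K * K + Mz * K))%R, M.
  split; [repeat apply Rmin_pos; lra|]. split; [exact HM1|].
  intros w Hwz Hw. pose proof (Rmin_l (Rmin dl 1) eta1). pose proof (Rmin_r (Rmin dl 1) eta1).
  pose proof (Rmin_l dl 1). pose proof (Rmin_r dl 1).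
  assert (HDw : off_poles w) by (apply HD; lra).
  assert (HwR : (Cmod w <= Rad)%R) by (pose proof (Cmod_sub_le w z0); unfold Rad; lra).
  pose proof (Cminus_neq0 w z0 Hwz) as Hh.
  set (Q := fun n => (gauss_seq w n - gauss_seq z0 n) / (w - z0)).
  assert (HQM : (Cmod (Q M) <= Cmod LM + 1)%R).
  { pose proof (Cmod_sub_le (Q M) LM). specialize (HLM1 w Hwz ltac:(lra)).
    change (Cmod (Q M - LM) <= 1)%R in HLM1. lra. }
  destruct (gauss_seq_cvg w HDw) as [_ [Nw [Aw [HNw HAw]]]].
  destruct (gauss_seq_cvg z0 Hz0) as [_ [Nz [Az [HNz HAz]]]].
  intros n Hn. eapply Rle_trans.
  - apply (perturbed_product_limit Q (fun m => gauss_factor m w - 1)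
             (fun m => gauss_seq z0 m * (((gauss_factor m w - 1) - (gauss_factor m z0 - 1)) / (w - z0)))
             K (Mz * K) M _ (max Nw Nz) ((Aw + Az) / Cmod (w - z0)) HM1 HK ltac:(nra)); [| |exact Hn].
    + intros m Hm. pose proof (le_INR _ _ Hm).
      split; [apply gauss_quotient_S; auto|]. split; [apply (gauss_seq_step w Rad M); auto|].
      rewrite Cmod_mult, Rmult_assoc. apply Rmult_le_compat; [apply Cmod_ge_0 | apply Cmod_ge_0 | |].
      * apply (gauss_seq_bounded z0 Rad M); auto.
      * apply Cmod_gauss_factor_quotient_le; auto; lra.
    + apply (rate_quotient _ _ _ (fun n => gauss_seq w n) (fun n => gauss_seq z0 n)); auto; [lia | |];
        intros k Hk; [apply HAw | apply HAz]; lia.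
  - unfold Rdiv. apply Rmult_le_compat_r; [left; apply Rinv_0_lt_compat, lt_0_INR; lia|].
    assert (0 <= exp K * K)%R by (pose proof (exp_pos K); nra).
    rewrite (Rmult_assoc _ (exp K) K), (Rmult_assoc _ (exp K) K). nra.
Qed.

Lemma CGamma_is_cderiv z : off_poles z -> exists L, is_cderiv CGamma z L.
Proof.
  intros Hz. destruct (gauss_quotient_uniform z Hz) as [eta [B [N [Heta [HN H]]]]].
  apply (is_cderiv_uniform_limit (fun n w => gauss_seq w n) CGamma
           (fun n => C_derive (fun w => gauss_seq w n) z) z eta B N Heta HN); [|exact H].
  intros n. destruct (is_cderiv_gauss_seq z n Hz) as [L HL].
  rewrite (is_cderiv_C_derive _ _ _ HL). exact HL.
Qed.

Lemma CGamma'_eq z L : is_cderiv CGamma z L -> CGamma' z = L.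
Proof.
  intros H. pose proof (is_cderiv_is_C_derive _ _ _ H) as H1. unfold CGamma'.
  set (P := fun l : C => is_derive (K := C_AbsRing) (V := C_NormedModule) CGamma z l).
  assert (Hs : P (epsilon (inhabits (RtoC 0)) P)) by (apply epsilon_spec; exists L; exact H1).
  rewrite <- (is_C_derive_unique _ _ _ Hs). apply is_C_derive_unique, H1.
Qed.

Lemma digamma_succ z : off_poles z -> digamma (z + 1) = digamma z + / z.
Proof.
  intros Hz. destruct (CGamma_is_cderiv z Hz) as [L HL].
  destruct (CGamma_is_cderiv (z + 1) (off_poles_succ z Hz)) as [L1 HL1].
  destruct (off_poles_open z Hz) as [d [Hd HD]].
  assert (HA : is_cderiv (fun w => CGamma (w + 1)) z ((1 + 0) * L1)).
  { apply (is_cderiv_comp CGamma (fun w => w + 1)); [exact HL1|].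
    apply is_cderiv_plus; [apply is_cderiv_id | apply is_cderiv_const]. }
  assert (HB : is_cderiv (fun w => CGamma (w + 1)) z (1 * CGamma z + z * L)).
  { eapply is_cderiv_ext_loc; [|apply (is_cderiv_mult _ _ _ _ _ (is_cderiv_id z) HL)].
    exists d. split; auto. intros w Hw. symmetry. apply CGamma_succ, HD, Hw. }
  pose proof (is_cderiv_unique _ _ _ _ HA HB) as E.
  unfold digamma. rewrite (CGamma'_eq _ _ HL), (CGamma'_eq _ _ HL1), CGamma_succ by auto.
  pose proof (CGamma_neq0 z Hz). pose proof (off_poles_neq0 z Hz).
  assert (EL : L1 = CGamma z + z * L) by (transitivity ((1 + 0) * L1); [ring | rewrite E; ring]).
  rewrite EL.
  field. split; auto.
Qed.

(** * Binomial transforms of Pochhammer ratios *)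

Fixpoint sumC (f : nat -> C) (n : nat) : C :=
  match n with 0 => 0 | S n => sumC f n + f n end.

Lemma sumC_ext f g n : (forall j, (j < n)%nat -> f j = g j) -> sumC f n = sumC g n.
Proof. induction n; intros H; simpl; auto. rewrite IHn, H; auto. Qed.

Lemma sumC_plus f g n : sumC (fun j => f j + g j) n = sumC f n + sumC g n.
Proof. induction n; simpl; [ring | rewrite IHn; ring]. Qed.

Lemma sumC_sub f g n : sumC (fun j => f j - g j) n = sumC f n - sumC g n.
Proof. induction n; simpl; [ring | rewrite IHn; ring]. Qed.

Lemma sumC_scal c f n : sumC (fun j => c * f j) n = c * sumC f n.
Proof. induction n; simpl; [ring | rewrite IHn; ring]. Qed.

Lemma sumC_zero n : sumC (fun _ => 0) n = 0.
Proof. induction n; simpl; [auto | rewrite IHn; ring]. Qed.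

Lemma sumC_S_l f n : sumC f (S n) = f 0%nat + sumC (fun i => f (S i)) n.
Proof. induction n; simpl; [ring | simpl in IHn; rewrite IHn; ring]. Qed.

Lemma sumC_shift_index g n :
  sumC (fun j => match j with 0%nat => 0 | S j' => g j' end) (S n) = sumC g n.
Proof. rewrite sumC_S_l. simpl. apply Cplus_0_l. Qed.

Lemma sumC_swap (a : nat -> nat -> C) m n :
  sumC (fun i => sumC (fun j => a i j) n) m = sumC (fun j => sumC (fun i => a i j) m) n.
Proof. induction m; simpl; [rewrite sumC_zero; auto | rewrite IHm, <- sumC_plus; auto]. Qed.

Lemma sumC_extend (g : nat -> C) u N : (u <= N)%nat -> (forall k, (u < k)%nat -> g k = 0) ->
  sumC g (S N) = sumC g (S u).
Proof.
  intros H Hz. induction H; auto. change (sumC g (S (S m))) with (sumC g (S m) + g (S m)).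
  rewrite IHle, Hz by lia. ring.
Qed.

Definition harm_sum (a : C) (j : nat) : C := sumC (fun i => / (a + RtoC (INR i))) j.

Lemma harm_sum_S a j : harm_sum a (S j) = / a + harm_sum (a + 1) j.
Proof.
  unfold harm_sum. rewrite sumC_S_l. f_equal.
  - simpl. f_equal. apply injective_projections; simpl; ring.
  - apply sumC_ext. intros i _. f_equal. rewrite S_INR, RtoC_plus. ring.
Qed.

Lemma digamma_add_nat z k : off_poles z -> digamma (z + RtoC (INR k)) = digamma z + harm_sum z k.
Proof.
  intros Hz. induction k.
  - unfold harm_sum. simpl. replace (z + RtoC 0) with z by (apply injective_projections; simpl; ring). ring.
  - unfold harm_sum. simpl sumC. fold (harm_sum z k).
    replace (z + RtoC (INR (S k))) with ((z + RtoC (INR k)) + 1)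
      by (rewrite S_INR; apply injective_projections; simpl; ring).
    rewrite digamma_succ by (apply off_poles_add_nat; auto). rewrite IHk. ring.
Qed.

(* [alt_binom k j] is (-1)^j binom(k, j), the coefficient of t^j in (1 - t)^k. *)
Fixpoint alt_binom (k j : nat) : C :=
  match k with
  | 0%nat => match j with 0%nat => 1 | _ => 0 end
  | S k => alt_binom k j - match j with 0%nat => 0 | S j' => alt_binom k j' end
  end.

Lemma alt_binom_gt k j : (k < j)%nat -> alt_binom k j = 0.
Proof.
  revert j. induction k; intros j Hj; simpl.
  - destruct j; [lia | auto].
  - destruct j; [lia|]. rewrite IHk, IHk by lia. ring.
Qed.

Definition binom_transform (X : nat -> C) (k : nat) : C := sumC (fun j => alt_binom k j * X j) (S k).

Lemma binom_transform_extend X k N : (k <= N)%nat ->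
  sumC (fun j => alt_binom k j * X j) (S N) = binom_transform X k.
Proof. intros Hk. apply sumC_extend; auto. intros j Hj. rewrite alt_binom_gt by auto. ring. Qed.

Lemma binom_transform_0 X : binom_transform X 0 = X 0%nat.
Proof. unfold binom_transform. simpl. ring. Qed.

Lemma binom_transform_S X k :
  binom_transform X (S k) = binom_transform X k - binom_transform (fun j => X (S j)) k.
Proof.
  unfold binom_transform at 1. simpl alt_binom.
  rewrite (sumC_ext _ (fun j => alt_binom k j * X j
                                 - match j with 0%nat => 0 | S j' => alt_binom k j' * X (S j') end))
    by (intros j _; destruct j; ring).
  rewrite sumC_sub, sumC_shift_index, (binom_transform_extend X k (S k)) by lia. reflexivity.
Qed.

Lemma binom_transform_ext X Y k : (forall j, (j <= k)%nat -> X j = Y j) ->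
  binom_transform X k = binom_transform Y k.
Proof. intros H. apply sumC_ext. intros j Hj. rewrite H by lia. reflexivity. Qed.

Lemma binom_transform_scal c X k : binom_transform (fun j => c * X j) k = c * binom_transform X k.
Proof. unfold binom_transform. rewrite <- sumC_scal. apply sumC_ext. intros j _. ring. Qed.

Lemma binom_transform_plus X Y k :
  binom_transform (fun j => X j + Y j) k = binom_transform X k + binom_transform Y k.
Proof. unfold binom_transform. rewrite <- sumC_plus. apply sumC_ext. intros j _. ring. Qed.

Lemma pow_n_S_C (t : C) j : pow_n t (S j) = t * pow_n t j.
Proof. reflexivity. Qed.

Lemma binom_transform_pow (t : C) k : binom_transform (pow_n t) k = pow_n (RtoC 1 - t) k.
Proof.
  induction k.
  - rewrite binom_transform_0. reflexivity.
  - rewrite binom_transform_S, (binom_transform_ext (fun j => pow_n t (S j)) (fun j => t * pow_n t j))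
      by (intros; apply pow_n_S_C).
    rewrite binom_transform_scal, IHk, pow_n_S_C.
    (* [pow_n] lives in [Ring.sort C_Ring]; expose [C] to [ring]. *)
    match goal with |- ?a = ?b => change (@eq C a b) end. ring.
Qed.

Lemma poch_S_l a j : poch a (S j) = a * poch (a + 1) j.
Proof.
  induction j.
  - simpl. apply injective_projections; simpl; ring.
  - change (poch a (S (S j))) with (poch a (S j) * (a + RtoC (INR (S j)))).
    change (poch (a + 1) (S j)) with (poch (a + 1) j * (a + 1 + RtoC (INR j))).
    rewrite IHj, S_INR, RtoC_plus. ring.
Qed.

Lemma poch_neq0 a k : off_poles a -> poch a k <> 0.
Proof. intros H. induction k; simpl; [apply RtoC_neq0; lra | apply Cmult_neq_0; auto]. Qed.

Lemma poch_succ a k : off_poles a -> poch (a + 1) k = poch a k * (a + RtoC (INR k)) / a.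
Proof.
  intros Ha. pose proof (off_poles_neq0 a Ha). pose proof (poch_S_l a k) as E. simpl poch in E.
  rewrite E. field. auto.
Qed.

Definition poch_ratio (a c : C) (j : nat) : C := poch a j / poch c j.

Lemma poch_ratio_S a c j : off_poles c -> poch_ratio a c (S j) = a / c * poch_ratio (a + 1) (c + 1) j.
Proof.
  intros Hc. unfold poch_ratio. rewrite !poch_S_l.
  pose proof (poch_neq0 (c + 1) j (off_poles_succ c Hc)). pose proof (off_poles_neq0 c Hc).
  field. split; auto.
Qed.

Lemma binom_transform_poch_ratio k : forall a c, off_poles c ->
  binom_transform (poch_ratio a c) k = poch_ratio (c - a) c k.
Proof.
  induction k; intros a c Hc.
  - rewrite binom_transform_0. unfold poch_ratio. simpl. field.
  - rewrite binom_transform_S.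
    rewrite (binom_transform_ext (fun j => poch_ratio a c (S j)) (fun j => a / c * poch_ratio (a + 1) (c + 1) j))
      by (intros; apply poch_ratio_S; auto).
    rewrite binom_transform_scal, IHk, IHk by (auto using off_poles_succ).
    replace (c + 1 - (a + 1)) with (c - a) by ring.
    unfold poch_ratio. rewrite poch_succ by auto. simpl poch.
    pose proof (poch_neq0 c k Hc). pose proof (off_poles_neq0 c Hc). pose proof (Hc k).
    field. repeat split; auto.
Qed.

(* The derivative of the previous identity with respect to [a]. *)
Lemma binom_transform_poch_ratio_harm k : forall a c, off_poles c -> off_poles a -> off_poles (c - a) ->
  binom_transform (fun j => poch_ratio a c j * harm_sum a j) k = - poch_ratio (c - a) c k * harm_sum (c - a) k.
Proof.
  induction k; intros a c Hc Ha Hca.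
  - rewrite binom_transform_0. unfold poch_ratio, harm_sum. simpl. ring.
  - rewrite binom_transform_S.
    rewrite (binom_transform_ext (fun j => poch_ratio a c (S j) * harm_sum a (S j))
      (fun j => / c * poch_ratio (a + 1) (c + 1) j + a / c * (poch_ratio (a + 1) (c + 1) j * harm_sum (a + 1) j))).
    2:{ intros j _. rewrite poch_ratio_S, harm_sum_S by auto.
        field. split; apply off_poles_neq0; auto. }
    assert (Hca' : off_poles (c + 1 - (a + 1))) by (replace (c + 1 - (a + 1)) with (c - a) by ring; auto).
    rewrite binom_transform_plus, !binom_transform_scal, binom_transform_poch_ratio, !IHk
      by (auto using off_poles_succ).
    replace (c + 1 - (a + 1)) with (c - a) by ring.
    unfold poch_ratio. rewrite poch_succ by auto. unfold harm_sum. simpl poch. simpl sumC. fold (harm_sum (c - a) k).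
    pose proof (poch_neq0 c k Hc). pose proof (off_poles_neq0 c Hc). pose proof (Hc k). pose proof (Hca k).
    field. repeat split; auto.
Qed.

(** * Transferring the polynomial identity *)

Lemma sumC_pow_S_l (d : nat -> C) t n :
  sumC (fun j => d j * pow_n t j) (S n) = d 0%nat + t * sumC (fun j => d (S j) * pow_n t j) n.
Proof.
  rewrite sumC_S_l, <- sumC_scal. f_equal; [apply Cmult_1_r|].
  apply sumC_ext. intros j _. rewrite pow_n_S_C. ring.
Qed.

Lemma Cmod_pow_n_le1 (t : C) n : (Cmod t <= 1)%R -> (Cmod (pow_n t n) <= 1)%R.
Proof.
  intros Ht. induction n; [change (Cmod (RtoC 1) <= 1)%R; rewrite Cmod_1; lra|].
  rewrite pow_n_S_C, Cmod_mult. pose proof (Cmod_ge_0 t). pose proof (Cmod_ge_0 (pow_n t n)). nra.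
Qed.

Lemma poly_bounded_on_disc (d : nat -> C) n :
  exists A, forall t, (Cmod t <= 1)%R -> (Cmod (sumC (fun j => (d j * pow_n t j)%C) n) <= A)%R.
Proof.
  induction n as [|n [A HA]].
  - exists 0%R. intros t _. simpl. rewrite Cmod_0. lra.
  - exists (A + Cmod (d n))%R. intros t Ht. simpl.
    eapply Rle_trans; [apply Cmod_triangle|]. apply Rplus_le_compat; auto.
    rewrite Cmod_mult. rewrite <- (Rmult_1_r (Cmod (d n))) at 2.
    apply Rmult_le_compat_l; [apply Cmod_ge_0 | apply Cmod_pow_n_le1, Ht].
Qed.

Lemma poly_coeff0_eq0 (d : nat -> C) n :
  (forall t : C, t <> 0 -> sumC (fun j => d j * pow_n t j) (S n) = 0) -> d 0%nat = 0.
Proof.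
  intros H. destruct (poly_bounded_on_disc (fun j => d (S j)) n) as [A HA].
  apply (zero_of_rate _ 1 A). intros k Hk.
  assert (Hk0 : (1 <= INR k)%R) by (apply (le_INR 1); lia).
  set (t := RtoC (/ INR k)).
  assert (Htm : Cmod t = (/ INR k)%R)
    by (unfold t; rewrite Cmod_R, Rabs_pos_eq; auto; left; apply Rinv_0_lt_compat; lra).
  assert (Ht0 : t <> 0) by (apply RtoC_neq0, Rinv_neq_0_compat; lra).
  specialize (H t Ht0). rewrite sumC_pow_S_l in H.
  replace (d 0%nat) with (- (t * sumC (fun j => d (S j) * pow_n t j) n))
    by (rewrite <- (Cplus_0_l (- _)), <- H; ring).
  rewrite Cmod_opp, Cmod_mult, Htm, Rmult_comm. apply Rmult_le_compat_r.
  - left. apply Rinv_0_lt_compat. lra.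
  - apply HA. rewrite Htm, <- Rinv_1. apply Rinv_le_contravar; lra.
Qed.

Lemma poly_coeffs_eq0 N : forall d : nat -> C,
  (forall t : C, t <> 0 -> sumC (fun j => d j * pow_n t j) (S N) = 0) -> forall j, (j <= N)%nat -> d j = 0.
Proof.
  induction N; intros d H j Hj; pose proof (poly_coeff0_eq0 d _ H) as Hd0.
  - replace j with 0%nat by lia. exact Hd0.
  - destruct j as [|j]; [exact Hd0|].
    apply (IHN (fun i => d (S i))); [|lia]. intros t Ht.
    specialize (H t Ht). rewrite sumC_pow_S_l, Hd0, Cplus_0_l in H.
    replace (sumC (fun j => d (S j) * pow_n t j) (S N)) with (/ t * (t * sumC (fun j => d (S j) * pow_n t j) (S N)))
      by (field; auto).
    rewrite H. ring.
Qed.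

Definition restrict (l u : nat) (h : nat -> C) (k : nat) : C :=
  if andb (Nat.leb l k) (Nat.leb k u) then h k else 0.

Lemma sum_n_m_restrict (h : nat -> C) l u N : (u <= N)%nat -> sum_n_m h l u = sumC (restrict l u h) (S N).
Proof.
  intros HN. rewrite (sumC_extend _ u N HN).
  2:{ intros k Hk. unfold restrict. rewrite (proj2 (Nat.leb_gt k u) Hk). destruct (Nat.leb l k); reflexivity. }
  clear HN. induction u.
  - unfold restrict. destruct l.
    + rewrite sum_n_n. symmetry. apply Cplus_0_l.
    + rewrite sum_n_m_zero by lia. symmetry. apply Cplus_0_l.
  - destruct (Nat.le_gt_cases l (S u)) as [Hl|Hl].
    + rewrite sum_n_Sm, IHu by lia.
      change (sumC (restrict l (S u) h) (S (S u)))
        with (sumC (restrict l (S u) h) (S u) + restrict l (S u) h (S u)).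
      unfold restrict at 3. rewrite (proj2 (Nat.leb_le l (S u)) Hl), Nat.leb_refl. simpl andb.
      change (sumC (restrict l u h) (S u) + h (S u) = sumC (restrict l (S u) h) (S u) + h (S u)).
      f_equal. apply sumC_ext. intros j Hj. unfold restrict.
      rewrite (proj2 (Nat.leb_le j u)), (proj2 (Nat.leb_le j (S u))) by lia. reflexivity.
    + rewrite sum_n_m_zero by lia. rewrite (sumC_ext _ (fun _ => 0)), sumC_zero; [reflexivity|].
      intros j Hj. unfold restrict. rewrite (proj2 (Nat.leb_gt l j)) by lia. reflexivity.
Qed.

Lemma sumC_binom_transform_swap (a Y : nat -> C) N :
  sumC (fun k => a k * binom_transform Y k) (S N) =
  sumC (fun j => sumC (fun k => a k * alt_binom k j) (S N) * Y j) (S N).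
Proof.
  rewrite (sumC_ext _ (fun k => sumC (fun j => a k * alt_binom k j * Y j) (S N))).
  2:{ intros k Hk. rewrite <- (binom_transform_extend Y k N) by lia. rewrite <- sumC_scal.
      apply sumC_ext. intros j _. ring. }
  rewrite sumC_swap. apply sumC_ext. intros j _.
  rewrite <- (Cmult_comm (Y j)), <- sumC_scal. apply sumC_ext. intros k _. ring.
Qed.

Lemma sum_n_m_restrict_mult (h Y : nat -> C) l u N : (u <= N)%nat ->
  sum_n_m (fun k => h k * Y k) l u = sumC (fun k => restrict l u h k * Y k) (S N).
Proof.
  intros Hu. rewrite (sum_n_m_restrict _ l u N Hu). apply sumC_ext. intros k _.
  unfold restrict. destruct (andb _ _); ring.
Qed.

(* Comparing coefficients of t^j. *)
Lemma binom_transform_coeffs l1 u1 l2 u2 (f g : nat -> C) N : (u1 <= N)%nat -> (u2 <= N)%nat ->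
  (forall t : C, sum_n_m (fun k => f k * pow_n (RtoC 1 - t) k) l1 u1 = sum_n_m (fun k => g k * pow_n t k) l2 u2) ->
  forall j, (j <= N)%nat -> sumC (fun k => restrict l1 u1 f k * alt_binom k j) (S N) = restrict l2 u2 g j.
Proof.
  intros H1 H2 Hpoly.
  set (c := fun j => sumC (fun k => restrict l1 u1 f k * alt_binom k j) (S N)).
  intros j Hj. change (c j = restrict l2 u2 g j). enough (c j - restrict l2 u2 g j = 0) as E
    by (replace (c j) with (c j - restrict l2 u2 g j + restrict l2 u2 g j) by ring; rewrite E; ring).
  revert j Hj. apply (poly_coeffs_eq0 N (fun j => c j - restrict l2 u2 g j)). intros t _.
  specialize (Hpoly t).
  rewrite (sum_n_m_ext _ (fun k => f k * binom_transform (pow_n t) k)) in Hpoly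
    by (intros k; rewrite binom_transform_pow; reflexivity).
  rewrite (sum_n_m_restrict_mult _ _ _ _ N H1), (sum_n_m_restrict_mult _ _ _ _ N H2),
    sumC_binom_transform_swap in Hpoly.
  change (sumC (fun j => c j * pow_n t j) (S N) = sumC (fun k => restrict l2 u2 g k * pow_n t k) (S N))
    in Hpoly.
  rewrite (sumC_ext _ (fun j => c j * pow_n t j - restrict l2 u2 g j * pow_n t j)) by (intros j _; ring).
  rewrite sumC_sub, Hpoly. ring.
Qed.

Lemma sum_n_m_binom_transform l1 u1 l2 u2 (f g : nat -> C) :
  (forall t : C, sum_n_m (fun k => f k * pow_n (RtoC 1 - t) k) l1 u1 = sum_n_m (fun k => g k * pow_n t k) l2 u2) ->
  forall X, sum_n_m (fun k => f k * binom_transform X k) l1 u1 = sum_n_m (fun j => g j * X j) l2 u2.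
Proof.
  intros Hpoly X. set (N := max u1 u2).
  rewrite (sum_n_m_restrict_mult _ _ _ _ N), (sum_n_m_restrict_mult _ _ _ _ N), sumC_binom_transform_swap
    by lia.
  apply sumC_ext. intros j Hj. rewrite (binom_transform_coeffs l1 u1 l2 u2 f g N) by (auto; lia).
  reflexivity.
Qed.

Lemma off_poles_succ_of_not_negint z : ~ is_negint z -> off_poles (z + 1).
Proof.
  intros Hz j E. apply Hz. exists j. replace z with (z + 1 + RtoC (INR j) - RtoC (INR (S j))).
  - rewrite E, S_INR. apply injective_projections; simpl; ring.
  - rewrite S_INR. apply injective_projections; simpl; ring.
Qed.

Lemma off_poles_of_not_negint z : ~ is_negint z -> z <> 0 -> off_poles z.
Proof.
  intros Hz H0 j. destruct j.
  - replace (z + RtoC (INR 0)) with z by (apply injective_projections; simpl; ring). auto.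
  - replace (z + RtoC (INR (S j))) with (z + 1 + RtoC (INR j))
      by (rewrite S_INR; apply injective_projections; simpl; ring).
    apply off_poles_succ_of_not_negint; auto.
Qed.

Lemma sum_n_m_Cplus (u v : nat -> C) n m :
  sum_n_m (fun k => u k + v k) n m = sum_n_m u n m + sum_n_m v n m.
Proof. exact (sum_n_m_plus u v n m). Qed.

(* The identities are [sum_n_m_binom_transform] applied to these two sequences. *)
Definition binom_weight (r s : C) (j : nat) : C := / Cbinom r s * poch_ratio s (r + 1) j.

Definition harm_weight (r s : C) (j : nat) : C :=
  binom_weight r s j * (digamma s - digamma (r - s + 1) + / s + harm_sum s j).

Section Weights.

Variables r s : C.
Hypothesis Ds : off_poles s.
Hypothesis Dr : off_poles (r + 1).
Hypothesis Drs : off_poles (r - s + 1).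

Lemma inv_Cbinom_add_nat k :
  RtoC 1 / Cbinom (RtoC (INR k) + r) s = / Cbinom r s * poch_ratio (r - s + 1) (r + 1) k.
Proof.
  unfold Cbinom, poch_ratio.
  replace (RtoC (INR k) + r + RtoC 1) with (r + 1 + RtoC (INR k)) by ring.
  replace (RtoC (INR k) + r - s + RtoC 1) with (r - s + 1 + RtoC (INR k)) by ring.
  replace (r + RtoC 1) with (r + 1) by reflexivity. replace (r - s + RtoC 1) with (r - s + 1) by reflexivity.
  rewrite !CGamma_add_nat by auto.
  pose proof (CGamma_neq0 _ Dr). pose proof (CGamma_neq0 _ Drs). pose proof (CGamma_neq0 _ (off_poles_succ _ Ds)).
  pose proof (poch_neq0 _ k Dr). pose proof (poch_neq0 _ k Drs).
  field. repeat split; auto.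
Qed.

Lemma binom_weight_eq j :
  binom_weight r s j = s / (r - s + RtoC 1) * (RtoC 1 / Cbinom (RtoC (INR j) + r) (r - s + RtoC 1)).
Proof.
  unfold binom_weight, Cbinom, poch_ratio.
  replace (RtoC (INR j) + r + RtoC 1) with (r + 1 + RtoC (INR j)) by ring.
  replace (RtoC (INR j) + r - (r - s + RtoC 1) + RtoC 1) with (s + RtoC (INR j)) by ring.
  replace (r + RtoC 1) with (r + 1) by reflexivity. replace (r - s + RtoC 1) with (r - s + 1) by reflexivity.
  replace (s + RtoC 1) with (s + 1) by reflexivity.
  rewrite !CGamma_add_nat, (CGamma_succ (r - s + 1)), (CGamma_succ s) by auto.
  pose proof (CGamma_neq0 _ Dr). pose proof (CGamma_neq0 _ Drs). pose proof (CGamma_neq0 _ Ds).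
  pose proof (poch_neq0 _ j Dr). pose proof (poch_neq0 _ j Ds).
  pose proof (off_poles_neq0 _ Ds). pose proof (off_poles_neq0 _ Drs).
  field. repeat split; auto.
Qed.

Lemma binom_transform_binom_weight k :
  binom_transform (binom_weight r s) k = RtoC 1 / Cbinom (RtoC (INR k) + r) s.
Proof.
  unfold binom_weight. rewrite binom_transform_scal, binom_transform_poch_ratio by auto.
  rewrite inv_Cbinom_add_nat. do 2 f_equal. ring.
Qed.

Lemma Harm_sub_add_nat_l k :
  Harm s - Harm (RtoC (INR k) + r - s) = digamma s - digamma (r - s + 1) + / s - harm_sum (r - s + 1) k.
Proof.
  unfold Harm. replace (RtoC (INR k) + r - s + RtoC 1) with (r - s + 1 + RtoC (INR k)) by ring.
  rewrite digamma_add_nat, digamma_succ by auto. ring.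
Qed.

Lemma Harm_sub_add_nat_r j :
  Harm (RtoC (INR j) + s - RtoC 1) - Harm (r - s + RtoC 1)
  = digamma s - digamma (r - s + 1) + harm_sum s j - / (r - s + 1).
Proof.
  unfold Harm. replace (RtoC (INR j) + s - RtoC 1 + RtoC 1) with (s + RtoC (INR j)) by ring.
  replace (r - s + RtoC 1 + RtoC 1) with ((r - s + 1) + 1) by ring.
  rewrite digamma_add_nat, digamma_succ by auto. ring.
Qed.

Lemma binom_transform_harm_weight k :
  binom_transform (harm_weight r s) k = (Harm s - Harm (RtoC (INR k) + r - s)) / Cbinom (RtoC (INR k) + r) s.
Proof.
  set (Q := digamma s - digamma (r - s + 1) + / s).
  unfold harm_weight, binom_weight.
  rewrite (binom_transform_ext _ (fun j => / Cbinom r s * (Q * poch_ratio s (r + 1) j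
                                     + poch_ratio s (r + 1) j * harm_sum s j))) by (intros; fold Q; ring).
  rewrite binom_transform_scal, binom_transform_plus, binom_transform_scal, binom_transform_poch_ratio,
    binom_transform_poch_ratio_harm by (auto; replace (r + 1 - s) with (r - s + 1) by ring; auto).
  replace (r + 1 - s) with (r - s + 1) by ring.
  unfold Cdiv. rewrite Cmult_comm, <- (Cmult_1_l (/ Cbinom (RtoC (INR k) + r) s)).
  change (RtoC 1 * / Cbinom (RtoC (INR k) + r) s) with (RtoC 1 / Cbinom (RtoC (INR k) + r) s).
  rewrite inv_Cbinom_add_nat, Harm_sub_add_nat_l. fold Q. ring.
Qed.

Lemma harm_weight_eq j :
  harm_weight r s j =
  (r + RtoC 1) / ((r - s + RtoC 1) * (r - s + RtoC 1)) * (RtoC 1 / Cbinom (RtoC (INR j) + r) (r - s + RtoC 1))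
  + s / (r - s + RtoC 1) * ((Harm (RtoC (INR j) + s - RtoC 1) - Harm (r - s + RtoC 1))
                             / Cbinom (RtoC (INR j) + r) (r - s + RtoC 1)).
Proof.
  pose proof (off_poles_neq0 _ Ds). pose proof (off_poles_neq0 _ Drs).
  assert (E : RtoC 1 / Cbinom (RtoC (INR j) + r) (r - s + RtoC 1) = (r - s + 1) / s * binom_weight r s j).
  { rewrite binom_weight_eq, Cmult_assoc.
    replace ((r - s + 1) / s * (s / (r - s + RtoC 1))) with (RtoC 1) by (field; split; auto). ring. }
  unfold Cdiv at 4. rewrite Cmult_comm, <- (Cmult_1_l (/ Cbinom _ _)).
  change (RtoC 1 * / Cbinom (RtoC (INR j) + r) (r - s + RtoC 1))
    with (RtoC 1 / Cbinom (RtoC (INR j) + r) (r - s + RtoC 1)).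
  rewrite E, Harm_sub_add_nat_r. unfold harm_weight.
  replace (r + RtoC 1) with (r - s + 1 + s) by ring. field. split; auto.
Qed.

End Weights.

Theorem lemma5 (l1 u1 l2 u2 : nat) (f g : nat -> C)
  (Hpoly : forall t : C,
     sum_n_m (fun k => f k * pow_n (RtoC 1 - t) k) l1 u1
     = sum_n_m (fun k => g k * pow_n t k) l2 u2)
  (r s : C) (Hr : ~ is_negint r) (Hs : ~ is_negint s) (Hs0 : s <> RtoC 0)
  (Hrs : ~ is_negint (r - s)) :
  sum_n_m (fun k => f k * (RtoC 1 / Cbinom (RtoC (INR k) + r) s)) l1 u1
  = sum_n_m (fun k => g k * (s / (r - s + RtoC 1))
                 * (RtoC 1 / Cbinom (RtoC (INR k) + r) (r - s + RtoC 1))) l2 u2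
  /\
  sum_n_m (fun k => f k * ((Harm s - Harm (RtoC (INR k) + r - s))
                             / Cbinom (RtoC (INR k) + r) s)) l1 u1
  = sum_n_m (fun k => g k * ((r + RtoC 1) / ((r - s + RtoC 1) * (r - s + RtoC 1)))
                 * (RtoC 1 / Cbinom (RtoC (INR k) + r) (r - s + RtoC 1))) l2 u2
    + sum_n_m (fun k => g k * (s / (r - s + RtoC 1))
                 * ((Harm (RtoC (INR k) + s - RtoC 1) - Harm (r - s + RtoC 1))
                    / Cbinom (RtoC (INR k) + r) (r - s + RtoC 1))) l2 u2.
Proof.
  pose proof (off_poles_of_not_negint s Hs Hs0) as Ds.
  pose proof (off_poles_succ_of_not_negint r Hr) as Dr.
  pose proof (off_poles_succ_of_not_negint (r - s) Hrs) as Drs.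
  pose proof (sum_n_m_binom_transform l1 u1 l2 u2 f g Hpoly) as Htransfer.
  split.
  - rewrite (sum_n_m_ext _ (fun k => f k * binom_transform (binom_weight r s) k))
      by (intros k; rewrite binom_transform_binom_weight; auto).
    rewrite Htransfer. apply sum_n_m_ext. intros j.
    rewrite binom_weight_eq by auto. apply Cmult_assoc.
  - rewrite (sum_n_m_ext _ (fun k => f k * binom_transform (harm_weight r s) k))
      by (intros k; rewrite binom_transform_harm_weight; auto).
    rewrite Htransfer, <- sum_n_m_Cplus. apply sum_n_m_ext. intros j.
    rewrite harm_weight_eq by auto. rewrite <- !Cmult_assoc. apply Cmult_plus_distr_l.
Qed.
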